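(* Let $f, g \in \mathrm{Inj}(\Omega)$ each have at least one infinite cycle. Then $f \approx_{\mathrm{fin}} g$ if and only if $f = hh_1gh_2h^{-1}$ for some $h \in \mathrm{Sym}(\Omega)$ and $h_1, h_2 \in \mathrm{Fin}(\Omega)$.
   Context: $\Omega$ is a countably infinite set; maps are written on the right and composed left to right. $\mathrm{Inj}(\Omega)$ is the monoid of injective maps $\Omega\to\Omega$, $\mathrm{Sym}(\Omega)$ the permutation group, $\mathrm{Fin}(\Omega)$ the permutations moving only finitely many points. For $f\in\mathrm{Inj}(\Omega)$, a cycle of $f$ is a nonempty $\Sigma\subseteq\Omega$ such that (a) for all $\alpha\in\Omega$, $(\alpha)f\in\Sigma$ iff $\alpha\in\Sigma$, and (b) no proper nonempty subset of $\Sigma$ satisfies (a). A forward cycle is an infinite cycle $\Sigma$ with $\Sigma\setminus(\Omega)f\ne\emptyset$; an open cycle is an infinite cycle that is not forward. For $n\in\mathbb{Z}_+$, $(f)\mathrm{C}_n$ is the cardinal number of cycles of $f$ of cardinality $n$; $(f)\mathrm{C}_{\mathrm{open}}$, $(f)\mathrm{C}_{\mathrm{fwd}}$ are the numbers of open and forward cycles. $f\approx_{\mathrm{fin}}g$ means: $(f)\mathrm{C}_{\mathrm{open}}=(g)\mathrm{C}_{\mathrm{open}}$; $(f)\mathrm{C}_{\mathrm{fwd}}=(g)\mathrm{C}_{\mathrm{fwd}}$; $(f)\mathrm{C}_n\ne(g)\mathrm{C}_n$ for only finitely many $n\in\mathbb{Z}_+$; and whenever $(f)\mathrm{C}_n\ne(g)\mathrm{C}_n$,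 both are finite. *)

(* Sets of points are predicates [Ω -> Prop]; sets are compared
   extensionally ([seteq]), and cardinalities of families of cycles are compared
   up to extensional equality of the cycles. *)
From Stdlib Require Import List Arith.

Definition injective {X Y : Type} (f : X -> Y) : Prop :=
  forall a b, f a = f b -> a = b.

Definition countably_infinite (X : Type) : Prop :=
  exists e : X -> nat, injective e /\ (forall n, exists a, e a = n).

Definition seteq {X : Type} (S T : X -> Prop) : Prop := forall a, S a <-> T a.

Definition finite_set {X : Type} (S : X -> Prop) : Prop :=
  exists l : list X, forall a, S a -> In a l.

Definition has_card {X : Type} (S : X -> Prop) (n : nat) : Prop :=
  exists l : list X, NoDup l /\ length l = n /\ (forall a, S a <-> In a l).

Definition invariant {X : Type} (f : X -> X) (S : X -> Prop) : Prop :=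
  forall a, S (f a) <-> S a.

Definition is_cycle {X : Type} (f : X -> X) (S : X -> Prop) : Prop :=
  (exists a, S a) /\ invariant f S /\
  (forall T : X -> Prop, (exists a, T a) -> (forall a, T a -> S a) ->
     invariant f T -> seteq T S).

Definition infinite_cycle {X : Type} (f : X -> X) (S : X -> Prop) : Prop :=
  is_cycle f S /\ ~ finite_set S.

Definition forward_cycle {X : Type} (f : X -> X) (S : X -> Prop) : Prop :=
  infinite_cycle f S /\ (exists a, S a /\ forall b, f b <> a).

Definition open_cycle {X : Type} (f : X -> X) (S : X -> Prop) : Prop :=
  infinite_cycle f S /\ ~ (exists a, S a /\ forall b, f b <> a).

Definition cycle_of_size {X : Type} (f : X -> X) (n : nat) (S : X -> Prop) : Prop :=
  is_cycle f S /\ has_card S n.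

Definition equipotent {X : Type} (P Q : (X -> Prop) -> Prop) : Prop :=
  exists F : (X -> Prop) -> (X -> Prop),
    (forall S, P S -> Q (F S)) /\
    (forall S S', P S -> P S' -> seteq (F S) (F S') -> seteq S S') /\
    (forall T, Q T -> exists S, P S /\ seteq (F S) T).

Definition finite_family {X : Type} (P : (X -> Prop) -> Prop) : Prop :=
  exists l : list (X -> Prop), forall S, P S -> exists T, In T l /\ seteq S T.

Definition approx_fin {X : Type} (f g : X -> X) : Prop :=
  equipotent (open_cycle f) (open_cycle g) /\
  equipotent (forward_cycle f) (forward_cycle g) /\
  (exists N, forall n, N <= n -> equipotent (cycle_of_size f n) (cycle_of_size g n)) /\
  (forall n, 1 <= n -> ~ equipotent (cycle_of_size f n) (cycle_of_size g n) ->
     finite_family (cycle_of_size f n) /\ finite_family (cycle_of_size g n)).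

Definition fin_perm {X : Type} (h : X -> X) : Prop :=
  (exists hinv : X -> X, (forall a, hinv (h a) = a) /\ (forall a, h (hinv a) = a)) /\
  finite_set (fun a => h a <> a).

(* The cycles of an injection come in three types: finite of size n, open (bi-infinite) and
   forward (starting at a point without preimage).  Two injections are conjugate by a permutation
   exactly when they have equally many cycles of each type: match cycles of equal type and glue
   the evident bijections between them.

   Composing g with a permutation k of finite support only affects the finitely many cycles that
   meet the support; an infinite cycle is eventually never moved, so its perturbation is again
   infinite and of the same type.  Hence the numbers of open and forward cycles are unchanged and
   only finitely many finite counts change, by finite amounts: conjugates of such perturbations
   of g are ≈_fin g.  Conversely, given f ≈_fin g and an infinite cycle, each of the finitely many
   discrepancies in the counts of n-cycles is repaired by transpositions: swapping x with
   g^n(x) on an infinite cycle cuts off a new n-cycle, and swapping a point of an n-cycle with a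
   point of an infinite cycle absorbs it.  The result k ∘ g has the cycle type of f. *)

From Stdlib Require Import List Arith Wf_nat Lia.
From Stdlib Require Import Classical ClassicalEpsilon FunctionalExtensionality PropExtensionality.
Import ListNotations.

Lemma seteq_eq {X : Type} (S T : X -> Prop) : seteq S T -> S = T.
Proof.
  intros H; apply functional_extensionality; intros a; apply propositional_extensionality; auto.
Qed.

Lemma seteq_refl {X : Type} (S : X -> Prop) : seteq S S.
Proof. intros a; reflexivity. Qed.

Lemma exists_least (P : nat -> Prop) : (exists n, P n) -> exists n, P n /\ forall m, P m -> n <= m.
Proof.
  intros H. destruct (dec_inh_nat_subset_has_unique_least_element P (fun n => classic (P n)) H)
    as [n [[Hn Hmin] _]]. eauto.
Qed.

Lemma injective_nat_not_finite {X : Type} (g : nat -> X) (l : list X) :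
  (forall i j, g i = g j -> i = j) -> ~ (forall i, In (g i) l).
Proof.
  intros Hinj Hin.
  assert (Hnd : NoDup (map g (seq 0 (S (length l)))))
    by (apply NoDup_map_NoDup_ForallPairs; [intros i j _ _; apply Hinj|apply seq_NoDup]).
  assert (Hincl : incl (map g (seq 0 (S (length l)))) l)
    by (intros x Hx; apply in_map_iff in Hx as [i [<- _]]; auto).
  pose proof (NoDup_incl_length Hnd Hincl). rewrite length_map, length_seq in *. lia.
Qed.

Lemma has_card_unique {X : Type} (S : X -> Prop) n m : has_card S n -> has_card S m -> n = m.
Proof.
  intros [l [Hl [<- HS]]] [l' [Hl' [<- HS']]].
  apply Nat.le_antisymm; apply NoDup_incl_length; auto; intros x Hx;
    [apply HS', HS | apply HS, HS']; auto.
Qed.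

Lemma has_card_finite {X : Type} (S : X -> Prop) n : has_card S n -> finite_set S.
Proof. intros [l [_ [_ H]]]; exists l; intros a; apply H. Qed.

Section Orbits.

Context {X : Type}.
Variable f : X -> X.

Lemma iter_comm m n a : Nat.iter m f (Nat.iter n f a) = Nat.iter n f (Nat.iter m f a).
Proof. rewrite <- !Nat.iter_add, Nat.add_comm; reflexivity. Qed.

(* The cycle of [f] through [a]: two points lie on a common cycle iff their forward orbits meet. *)
Definition orbit (a : X) : X -> Prop := fun b => exists m n, Nat.iter m f a = Nat.iter n f b.

Lemma orbit_refl a : orbit a a.
Proof. exists 0, 0; reflexivity. Qed.

Lemma orbit_sym a b : orbit a b -> orbit b a.
Proof. intros [m [n E]]; exists n, m; auto. Qed.

Lemma orbit_trans a b c : orbit a b -> orbit b c -> orbit a c.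
Proof.
  intros [m [n E]] [p [q E']]. exists (p + m), (n + q).
  rewrite !Nat.iter_add, E, iter_comm, E', iter_comm; reflexivity.
Qed.

Lemma orbit_iter a n : orbit a (Nat.iter n f a).
Proof. exists n, 0; reflexivity. Qed.

Lemma orbit_eq a b : orbit a b -> orbit a = orbit b.
Proof.
  intros H; apply seteq_eq; intros c; split; intros H'.
  - exact (orbit_trans _ _ _ (orbit_sym _ _ H) H').
  - exact (orbit_trans _ _ _ H H').
Qed.

Lemma orbit_invariant a : invariant f (orbit a).
Proof.
  intros b; split; intros H.
  - exact (orbit_trans _ _ _ H (orbit_sym _ _ (orbit_iter b 1))).
  - exact (orbit_trans _ _ _ H (orbit_iter b 1)).
Qed.

Lemma invariant_iter S : invariant f S -> forall n a, S (Nat.iter n f a) <-> S a.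
Proof.
  intros H n; induction n as [|n IH]; intros a; [reflexivity|].
  rewrite Nat.iter_succ. etransitivity; [apply H|apply IH].
Qed.

Lemma invariant_orbit S a b : invariant f S -> orbit a b -> S a -> S b.
Proof.
  intros HS [m [n E]] Ha. apply (invariant_iter S HS n). rewrite <- E.
  apply (invariant_iter S HS m); auto.
Qed.

Lemma orbit_is_cycle a : is_cycle f (orbit a).
Proof.
  split; [exists a; apply orbit_refl|split; [apply orbit_invariant|]].
  intros T [b Tb] Hsub HT c; split; [apply Hsub|].
  intros Hc. apply (invariant_orbit T b c HT); auto.
  exact (orbit_trans _ _ _ (orbit_sym _ _ (Hsub b Tb)) Hc).
Qed.

Lemma cycle_eq_orbit S a : is_cycle f S -> S a -> S = orbit a.
Proof.
  intros [_ [HS Hmin]] Ha. symmetry; apply seteq_eq, Hmin.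
  - exists a; apply orbit_refl.
  - intros b Hb; exact (invariant_orbit S a b HS Hb Ha).
  - apply orbit_invariant.
Qed.

Lemma is_cycle_iff S : is_cycle f S <-> exists a, S = orbit a.
Proof.
  split.
  - intros H. destruct (proj1 H) as [a Ha]. exists a; exact (cycle_eq_orbit S a H Ha).
  - intros [a ->]; apply orbit_is_cycle.
Qed.

Lemma cycles_meet_eq S T a : is_cycle f S -> is_cycle f T -> S a -> T a -> S = T.
Proof. intros HS HT Sa Ta. rewrite (cycle_eq_orbit S a), (cycle_eq_orbit T a); auto. Qed.

Definition aperiodic (a : X) : Prop := forall p, 0 < p -> Nat.iter p f a <> a.

Definition least_period (a : X) (p : nat) : Prop :=
  0 < p /\ Nat.iter p f a = a /\ forall q, 0 < q -> q < p -> Nat.iter q f a <> a.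

Definition no_preimage (a : X) : Prop := forall b, f b <> a.

Lemma iter_period_mul a p k : Nat.iter p f a = a -> Nat.iter (k * p) f a = a.
Proof. intros H; induction k as [|k IH]; [reflexivity|]. simpl. rewrite Nat.iter_add, IH; auto. Qed.

Lemma iter_period_mod a p n : 0 < p -> Nat.iter p f a = a -> Nat.iter n f a = Nat.iter (n mod p) f a.
Proof.
  intros Hp H. transitivity (Nat.iter (n mod p + n / p * p) f a).
  - f_equal. pose proof (Nat.div_mod_eq n p); lia.
  - rewrite Nat.iter_add, iter_period_mul; auto.
Qed.

Hypothesis Hf : injective f.

Lemma iter_inj n : injective (Nat.iter n f).
Proof. induction n as [|n IH]; intros a b E; [exact E|]. rewrite !Nat.iter_succ in E; auto. Qed.

Lemma iter_eq_period a m n : m < n -> Nat.iter m f a = Nat.iter n f a -> Nat.iter (n - m) f a = a.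
Proof.
  intros Hmn E. replace n with ((n - m) + m) in E by lia. rewrite Nat.iter_add, iter_comm in E.
  symmetry; exact (iter_inj m _ _ E).
Qed.

Lemma aperiodic_iter_inj a i j : aperiodic a -> Nat.iter i f a = Nat.iter j f a -> i = j.
Proof.
  intros Ha E. destruct (lt_eq_lt_dec i j) as [[Hl|He]|Hl]; auto; exfalso.
  - apply (Ha (j - i)); [lia|]. apply iter_eq_period; auto.
  - apply (Ha (i - j)); [lia|]. apply iter_eq_period; auto.
Qed.

Lemma least_period_iter_inj a p i j : least_period a p -> i < p -> j < p ->
  Nat.iter i f a = Nat.iter j f a -> i = j.
Proof.
  intros [_ [_ Hmin]] Hi Hj E. destruct (lt_eq_lt_dec i j) as [[Hl|He]|Hl]; auto; exfalso.
  - apply (Hmin (j - i)); try lia. apply iter_eq_period; auto.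
  - apply (Hmin (i - j)); try lia. apply iter_eq_period; auto.
Qed.

Lemma no_preimage_aperiodic a : no_preimage a -> aperiodic a.
Proof. intros H [|p] Hp E; [lia|]. rewrite Nat.iter_succ in E. exact (H _ E). Qed.

Lemma no_preimage_iter a m n : no_preimage a -> Nat.iter m f a = Nat.iter n f a -> m = n.
Proof. intros H; apply aperiodic_iter_inj, no_preimage_aperiodic, H. Qed.

Lemma no_preimage_reach a m n b : no_preimage a -> Nat.iter m f a = Nat.iter n f b -> n <= m.
Proof.
  intros H E. destruct (le_lt_dec n m) as [|Hl]; auto. exfalso.
  replace n with (S (n - m - 1) + m) in E by lia.
  rewrite Nat.iter_add, iter_comm in E. apply iter_inj in E.
  rewrite Nat.iter_succ in E. exact (H _ (eq_sym E)).
Qed.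

Lemma no_preimage_unique a b : no_preimage a -> no_preimage b -> orbit a b -> a = b.
Proof.
  intros Ha Hb [m [n E]].
  pose proof (no_preimage_reach a m n b Ha E).
  pose proof (no_preimage_reach b n m a Hb (eq_sym E)).
  replace n with m in E by lia. exact (iter_inj m _ _ E).
Qed.

Lemma periodic_orbit a b p : Nat.iter p f a = a -> orbit a b -> Nat.iter p f b = b.
Proof.
  intros Hp [m [n E]]. apply (iter_inj n). rewrite iter_comm, <- E, iter_comm, Hp; auto.
Qed.

Lemma aperiodic_orbit a b : aperiodic a -> orbit a b -> aperiodic b.
Proof.
  intros Ha Hab p Hp E. apply (Ha p Hp). exact (periodic_orbit b a p E (orbit_sym _ _ Hab)).
Qed.

Lemma least_period_orbit a b p : least_period a p -> orbit a b -> least_period b p.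
Proof.
  intros [H1 [H2 H3]] Hab. split; [auto|split; [exact (periodic_orbit a b p H2 Hab)|]].
  intros q Hq Hqp E. apply (H3 q Hq Hqp). exact (periodic_orbit b a q E (orbit_sym _ _ Hab)).
Qed.

Lemma periodic_orbit_enum a p : 0 < p -> Nat.iter p f a = a ->
  forall b, orbit a b <-> exists i, i < p /\ b = Nat.iter i f a.
Proof.
  intros Hp Ha b; split.
  - intros Hb. pose proof (periodic_orbit a b p Ha Hb) as Hbp. destruct Hb as [m [n E]].
    exists ((n * p - n + m) mod p). split; [apply Nat.mod_upper_bound; lia|].
    rewrite <- iter_period_mod; auto.
    rewrite Nat.iter_add, E, <- Nat.iter_add. replace (n * p - n + n) with (n * p) by nia.
    symmetry; apply iter_period_mul; auto.
  - intros [i [_ ->]]. apply orbit_iter.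
Qed.

Lemma least_period_card a p : least_period a p -> has_card (orbit a) p.
Proof.
  intros Hmin. pose proof Hmin as [Hp [Ha _]].
  exists (map (fun i => Nat.iter i f a) (seq 0 p)). split; [|split].
  - apply NoDup_map_NoDup_ForallPairs; [|apply seq_NoDup]. intros i j Hi Hj.
    apply in_seq in Hi; apply in_seq in Hj. apply (least_period_iter_inj a p); auto; lia.
  - rewrite length_map, length_seq; reflexivity.
  - intros b. rewrite (periodic_orbit_enum a p Hp Ha), in_map_iff. split.
    + intros [i [Hi ->]]. exists i; split; auto; apply in_seq; lia.
    + intros [i [<- Hi]]. apply in_seq in Hi. exists i; split; auto; lia.
Qed.

Lemma periodic_orbit_finite a p : 0 < p -> Nat.iter p f a = a -> finite_set (orbit a).
Proof.
  intros Hp Ha. exists (map (fun i => Nat.iter i f a) (seq 0 p)). intros b Hb.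
  apply (periodic_orbit_enum a p Hp Ha) in Hb as [i [Hi ->]].
  apply (in_map (fun i => Nat.iter i f a)), in_seq; lia.
Qed.

Lemma aperiodic_iff_infinite a : aperiodic a <-> ~ finite_set (orbit a).
Proof.
  split.
  - intros Ha [l Hl]. apply (injective_nat_not_finite (fun i => Nat.iter i f a) l).
    + intros i j; apply aperiodic_iter_inj; auto.
    + intros i; apply Hl, orbit_iter.
  - intros H p Hp Ha. exact (H (periodic_orbit_finite a p Hp Ha)).
Qed.

Lemma finite_orbit_least_period a : finite_set (orbit a) -> exists p, least_period a p.
Proof.
  intros Hfin. assert (Hper : exists p, 0 < p /\ Nat.iter p f a = a).
  { apply NNPP; intros Hno. apply (proj1 (aperiodic_iff_infinite a)); auto.
    intros p Hp E; apply Hno; eauto. }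
  destruct (exists_least _ Hper) as [p [[H1 H2] H3]].
  exists p; repeat split; auto. intros q Hq Hqp E. specialize (H3 q (conj Hq E)); lia.
Qed.

Lemma cycle_of_size_iff n S : cycle_of_size f n S <-> exists a, S = orbit a /\ least_period a n.
Proof.
  split.
  - intros [HS Hc]. apply is_cycle_iff in HS as [a ->]. exists a; split; auto.
    destruct (finite_orbit_least_period a (has_card_finite _ _ Hc)) as [p Hp].
    rewrite (has_card_unique _ _ _ Hc (least_period_card a p Hp)); auto.
  - intros [a [-> Ha]]. split; [apply orbit_is_cycle|apply least_period_card; auto].
Qed.

Lemma infinite_cycle_iff S : infinite_cycle f S <-> exists a, S = orbit a /\ aperiodic a.
Proof.
  unfold infinite_cycle. rewrite is_cycle_iff. split.
  - intros [[a ->] Hinf]. exists a; split; auto. apply aperiodic_iff_infinite; auto.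
  - intros [a [-> Ha]]. split; [eauto|apply aperiodic_iff_infinite; auto].
Qed.

Lemma forward_cycle_iff S : forward_cycle f S <-> exists a, S = orbit a /\ no_preimage a.
Proof.
  split.
  - intros [[HS _] [a [Sa Ha]]]. exists a; split; [apply cycle_eq_orbit|]; auto.
  - intros [a [-> Ha]]. split.
    + apply infinite_cycle_iff. exists a; split; auto. apply no_preimage_aperiodic; auto.
    + exists a; split; [apply orbit_refl|exact Ha].
Qed.

End Orbits.

Definition classic_eq_dec {A : Type} (x y : A) : {x = y} + {x <> y} :=
  excluded_middle_informative (x = y).

Lemma least_above (A : nat -> Prop) : (forall k, exists x, A x /\ k <= x) ->
  forall k, { x | (A x /\ k <= x) /\ forall y, A y -> k <= y -> x <= y }.
Proof.
  intros H k. apply constructive_indefinite_description.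
  destruct (exists_least (fun x => A x /\ k <= x) (H k)) as [x [Hx Hm]].
  exists x; split; auto.
Qed.

Lemma enumerate_unbounded (A : nat -> Prop) : (forall k, exists x, A x /\ k <= x) ->
  exists en : nat -> nat, (forall i, A (en i)) /\ (forall i j, en i = en j -> i = j) /\
    (forall x, A x -> exists i, en i = x).
Proof.
  intros H. pose (next := fun k => proj1_sig (least_above A H k)).
  assert (Hnext : forall k, (A (next k) /\ k <= next k) /\ forall y, A y -> k <= y -> next k <= y)
    by (intros k; exact (proj2_sig (least_above A H k))).
  pose (en := fix en i := match i with 0 => next 0 | S i => next (S (en i)) end).
  assert (HA : forall i, A (en i)) by (intros [|i]; simpl; apply Hnext).
  assert (Hinc : forall i, en i < en (S i)) by (intros i; simpl; pose proof (Hnext (S (en i))); lia).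
  assert (Hmono : forall i j, i < j -> en i < en j).
  { intros i j Hij; induction Hij; auto. specialize (Hinc m); lia. }
  exists en; split; [|split]; auto.
  - intros i j E. destruct (lt_eq_lt_dec i j) as [[Hl|He]|Hl]; auto;
      specialize (Hmono _ _ Hl); lia.
  - intros x Ax.
    assert (Hbelow : forall i y, A y -> y < en i -> exists j, en j = y).
    { induction i; intros y Ay Hy.
      - simpl in Hy. pose proof (proj2 (Hnext 0) y Ay ltac:(lia)); lia.
      - destruct (lt_eq_lt_dec y (en i)) as [[Hl|He]|Hl].
        + apply IHi; auto.
        + exists i; auto.
        + simpl in Hy. pose proof (proj2 (Hnext (S (en i))) y Ay ltac:(lia)); lia. }
    assert (Hge : forall i, i <= en i) by (induction i; [lia|specialize (Hinc i); lia]).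
    apply (Hbelow (S x) x Ax). specialize (Hge (S x)); lia.
Qed.

Section Families.

Context {X : Type}.
Implicit Types (P Q D : (X -> Prop) -> Prop) (S T : X -> Prop).

Definition family_has_card P (n : nat) : Prop :=
  exists l, NoDup l /\ length l = n /\ forall S, P S <-> In S l.

Lemma family_has_card_unique P n m : family_has_card P n -> family_has_card P m -> n = m.
Proof.
  intros [l [Hl [<- HS]]] [l' [Hl' [<- HS']]].
  apply Nat.le_antisymm; apply NoDup_incl_length; auto; intros x Hx;
    [apply HS', HS | apply HS, HS']; auto.
Qed.

Lemma finite_family_has_card P : finite_family P -> exists n, family_has_card P n.
Proof.
  intros [l Hl].
  set (l' := nodup classic_eq_dec
               (filter (fun S => if excluded_middle_informative (P S) then true else false) l)).
  exists (length l'), l'. split; [apply NoDup_nodup|split; [reflexivity|]].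
  intros S. unfold l'. rewrite nodup_In, filter_In.
  destruct (excluded_middle_informative (P S)) as [HS|HS]; [|intuition discriminate].
  split; [|tauto]. intros _; split; auto.
  destruct (Hl S HS) as [T [HT HST]]. apply seteq_eq in HST; subst; auto.
Qed.

Lemma family_has_card_finite P n : family_has_card P n -> finite_family P.
Proof.
  intros [l [_ [_ H]]]. exists l; intros S HS; exists S; split; [apply H; auto|apply seteq_refl].
Qed.

(* [None] stands for an infinite family; every family considered below is countable. *)
Definition family_card P : option nat :=
  match excluded_middle_informative (finite_family P) with
  | left H => Some (proj1_sig (constructive_indefinite_description _ (finite_family_has_card P H)))
  | right _ => None
  end.

Lemma family_card_Some P n : family_card P = Some n <-> family_has_card P n.
Proof.
  unfold family_card; destruct (excluded_middle_informative (finite_family P)) as [H|H].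
  - destruct (constructive_indefinite_description _ _) as [m Hm]; simpl. split.
    + intros E; injection E as <-; auto.
    + intros Hn; f_equal; eapply family_has_card_unique; eauto.
  - split; [discriminate|]. intros Hn; exfalso; apply H; eapply family_has_card_finite; eauto.
Qed.

Lemma family_card_None P : family_card P = None <-> ~ finite_family P.
Proof.
  unfold family_card; destruct (excluded_middle_informative (finite_family P));
    split; intros; auto; try discriminate; contradiction.
Qed.

Lemma finite_family_card P : finite_family P -> exists n, family_card P = Some n.
Proof.
  intros H. destruct (finite_family_has_card P H) as [n Hn]. exists n; apply family_card_Some; auto.
Qed.

Lemma family_card_ext P Q : (forall S, P S <-> Q S) -> family_card P = family_card Q.
Proof.
  intros H. replace Q with P; auto.
  apply functional_extensionality; intros; apply propositional_extensionality; auto.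
Qed.

Lemma family_card_zero P : family_card P = Some 0 <-> forall S, ~ P S.
Proof.
  rewrite family_card_Some. split.
  - intros [[|T l] [_ [Hl HP]]] S HS; [|discriminate]. apply HP in HS; inversion HS.
  - intros H. exists []. split; [constructor|split; auto].
    intros S; split; [intros HS; exfalso; eapply H; eauto|intros []].
Qed.

Lemma finite_family_sub P Q : (forall S, Q S -> P S) -> finite_family P -> finite_family Q.
Proof. intros H [l Hl]. exists l; auto. Qed.

Lemma finite_family_split P D :
  finite_family (fun S => P S /\ D S) -> finite_family (fun S => P S /\ ~ D S) -> finite_family P.
Proof.
  intros [l H1] [l' H2]. exists (l ++ l'). intros S HS. destruct (classic (D S)) as [HD|HD].
  - destruct (H1 S (conj HS HD)) as [T [HT E]]; exists T; split; auto; apply in_or_app; auto.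
  - destruct (H2 S (conj HS HD)) as [T [HT E]]; exists T; split; auto; apply in_or_app; auto.
Qed.

Lemma family_has_card_split P D a b :
  family_has_card (fun S => P S /\ D S) a -> family_has_card (fun S => P S /\ ~ D S) b ->
  family_has_card P (a + b).
Proof.
  intros [l [Hl [<- H1]]] [l' [Hl' [<- H2]]]. exists (l ++ l'). split; [|split].
  - apply NoDup_app; auto. intros x Hx Hx'. apply H1 in Hx; apply H2 in Hx'. tauto.
  - apply length_app.
  - intros S. rewrite in_app_iff, <- H1, <- H2. destruct (classic (D S)); tauto.
Qed.

Lemma family_card_split P D a b :
  family_card (fun S => P S /\ D S) = Some a -> family_card (fun S => P S /\ ~ D S) = Some b ->
  family_card P = Some (a + b).
Proof.
  rewrite !family_card_Some; apply family_has_card_split.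
Qed.

Lemma family_card_agree P Q D :
  (forall S, ~ D S -> (P S <-> Q S)) ->
  family_card (fun S => P S /\ D S) = family_card (fun S => Q S /\ D S) ->
  finite_family (fun S => P S /\ D S) ->
  family_card P = family_card Q.
Proof.
  intros Hag HD Hfin.
  assert (E : family_card (fun S => P S /\ ~ D S) = family_card (fun S => Q S /\ ~ D S)).
  { apply family_card_ext; intros S; split; intros [H1 H2]; split; auto; apply Hag; auto. }
  destruct (finite_family_card _ Hfin) as [a Ea].
  destruct (family_card (fun S => P S /\ ~ D S)) as [b|] eqn:Eb.
  - rewrite (family_card_split P D a b), (family_card_split Q D a b); congruence.
  - symmetry in E. apply family_card_None in Eb, E. rewrite !(proj2 (family_card_None _)); auto.
    + intros HQ. apply E, (finite_family_sub Q); tauto.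
    + intros HP. apply Eb, (finite_family_sub P); tauto.
Qed.

Lemma family_card_None_agree P Q D :
  (forall S, ~ D S -> (P S <-> Q S)) -> finite_family (fun S => P S /\ D S) ->
  family_card P = None -> family_card Q = None.
Proof.
  intros Hag HfD HP. apply family_card_None in HP; apply family_card_None; intros HQ.
  apply HP, (finite_family_split P D); auto.
  apply (finite_family_sub Q); auto. intros S [HS HD]; apply Hag; auto.
Qed.

Lemma family_card_add P Q T :
  (forall S, Q S <-> P S \/ S = T) -> ~ P T -> family_card Q = option_map S (family_card P).
Proof.
  intros HQ HT. destruct (family_card P) as [n|] eqn:E; simpl.
  - apply family_card_Some in E as [l [Hl [<- HP]]]. apply family_card_Some. exists (T :: l).
    split; [constructor; auto; rewrite <- HP; auto|split; [reflexivity|]].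
    intros S. rewrite HQ, HP. simpl. intuition.
  - apply family_card_None in E; apply family_card_None. intros Hf; apply E.
    apply (finite_family_sub Q); auto. intros S HS; apply HQ; auto.
Qed.

Lemma equipotent_sym P Q : equipotent P Q -> equipotent Q P.
Proof.
  intros [F [H1 [H2 H3]]].
  assert (Hg : forall T, Q T -> exists S, P S /\ F S = T).
  { intros T HT. destruct (H3 T HT) as [S [HS HST]]. exists S; split; auto; apply seteq_eq; auto. }
  set (G := fun T => epsilon (inhabits T) (fun S => P S /\ F S = T)).
  assert (HG : forall T, Q T -> P (G T) /\ F (G T) = T) by (intros T HT; apply epsilon_spec, Hg, HT).
  exists G. split; [|split].
  - intros T HT. apply HG, HT.
  - intros T T' HT HT' E. apply seteq_eq in E.
    rewrite <- (proj2 (HG T HT)), <- (proj2 (HG T' HT')), E. apply seteq_refl.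
  - intros S HS. exists (F S); split; auto.
    destruct (HG (F S) (H1 S HS)) as [HS' E]. apply H2; auto. rewrite E. apply seteq_refl.
Qed.

Lemma equipotent_finite_family P Q : equipotent P Q -> finite_family P -> finite_family Q.
Proof.
  intros [F [H1 [H2 H3]]] [l Hl]. exists (map F l). intros T HT.
  destruct (H3 T HT) as [S [HS E]]. destruct (Hl S HS) as [S' [HS' E']].
  apply seteq_eq in E; apply seteq_eq in E'; subst.
  exists (F S'); split; [apply in_map; auto|apply seteq_refl].
Qed.

Lemma equipotent_has_card_le P Q n m :
  equipotent P Q -> family_has_card P n -> family_has_card Q m -> n <= m.
Proof.
  intros [F [H1 [H2 H3]]] [l [Hl [<- HP]]] [l' [Hl' [<- HQ]]].
  rewrite <- (length_map F l). apply NoDup_incl_length.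
  - apply NoDup_map_NoDup_ForallPairs; auto. intros x y Hx Hy E.
    apply seteq_eq, H2; try apply HP; auto. rewrite E; apply seteq_refl.
  - intros T HT. apply in_map_iff in HT as [S [<- HS]]. apply HQ, H1, HP; auto.
Qed.

Lemma equipotent_family_card P Q : equipotent P Q -> family_card P = family_card Q.
Proof.
  intros H. pose proof (equipotent_sym _ _ H) as H'.
  destruct (family_card P) as [n|] eqn:EP; destruct (family_card Q) as [m|] eqn:EQ; auto.
  - apply family_card_Some in EP, EQ. f_equal.
    apply Nat.le_antisymm;
      [exact (equipotent_has_card_le _ _ _ _ H EP EQ)|exact (equipotent_has_card_le _ _ _ _ H' EQ EP)].
  - apply family_card_Some, family_has_card_finite in EP; apply family_card_None in EQ.
    exfalso; exact (EQ (equipotent_finite_family _ _ H EP)).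
  - apply family_card_Some, family_has_card_finite in EQ; apply family_card_None in EP.
    exfalso; exact (EP (equipotent_finite_family _ _ H' EQ)).
Qed.

Definition family_bijection P Q (F : (X -> Prop) -> (X -> Prop)) : Prop :=
  (forall S, P S -> Q (F S)) /\ (forall S S', P S -> P S' -> F S = F S' -> S = S') /\
  (forall T, Q T -> exists S, P S /\ F S = T).

Lemma equipotent_family_bijection P Q : equipotent P Q -> exists F, family_bijection P Q F.
Proof.
  intros [F [H1 [H2 H3]]]. exists F. split; [auto|split].
  - intros S S' HS HS' E. apply seteq_eq, H2; auto. rewrite E; apply seteq_refl.
  - intros T HT. destruct (H3 T HT) as [S [HS E]]. exists S; split; auto. apply seteq_eq; auto.
Qed.

Lemma family_bijection_equipotent P Q F : family_bijection P Q F -> equipotent P Q.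
Proof.
  intros [H1 [H2 H3]]. exists F. split; [auto|split].
  - intros S S' HS HS' E. rewrite (H2 S S' HS HS' (seteq_eq _ _ E)). apply seteq_refl.
  - intros T HT. destruct (H3 T HT) as [S [HS <-]]. exists S; split; auto. apply seteq_refl.
Qed.

Lemma equipotent_of_bijective_relation P Q
  (R : (X -> Prop) -> (X -> Prop) -> Prop) :
  (forall S, P S -> exists T, Q T /\ R S T) ->
  (forall T, Q T -> exists S, P S /\ R S T) ->
  (forall S T T', R S T -> R S T' -> T = T') ->
  (forall S S' T, R S T -> R S' T -> S = S') ->
  equipotent P Q.
Proof.
  intros Htot Hsurj Hfun Hinj.
  set (F := fun S => epsilon (inhabits S) (fun T => Q T /\ R S T)).
  assert (HF : forall S, P S -> Q (F S) /\ R S (F S)) by (intros S HS; apply epsilon_spec, Htot, HS).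
  apply (family_bijection_equipotent P Q F). split; [|split].
  - intros S HS; apply HF, HS.
  - intros S S' HS HS' E. apply (Hinj S S' (F S)); [apply HF, HS|rewrite E; apply HF, HS'].
  - intros T HT. destruct (Hsurj T HT) as [S [HS HR]]. exists S; split; auto.
    apply (Hfun S); [apply HF, HS|exact HR].
Qed.

Lemma list_bijection (l l' : list (X -> Prop)) : NoDup l -> NoDup l' -> length l = length l' ->
  exists F, family_bijection (fun S => In S l) (fun T => In T l') F.
Proof.
  revert l'; induction l as [|U l IH]; intros [|V l'] Hl Hl' E; simpl in E; try discriminate.
  - exists (fun S => S); simpl; repeat split; intros; contradiction.
  - inversion Hl as [|? ? HU Hl0]; inversion Hl' as [|? ? HV Hl0']; subst.
    destruct (IH l' Hl0 Hl0' ltac:(lia)) as [F [F1 [F2 F3]]].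
    exists (fun S => if classic_eq_dec S U then V else F S). split; [|split].
    + intros S HS; destruct (classic_eq_dec S U) as [->|HSU]; simpl; auto.
      destruct HS as [->|HS]; [contradiction|auto].
    + intros S S' HS HS'.
      destruct (classic_eq_dec S U) as [->|HSU]; destruct (classic_eq_dec S' U) as [->|HSU']; auto.
      * destruct HS' as [->|HS']; [contradiction|]. intros E'; exfalso; apply HV; rewrite E'; auto.
      * destruct HS as [->|HS]; [contradiction|]. intros E'; exfalso; apply HV; rewrite <- E'; auto.
      * destruct HS as [->|HS]; [contradiction|]. destruct HS' as [->|HS']; [contradiction|]. auto.
    + intros T [<-|HT].
      * exists U; split; simpl; auto. destruct (classic_eq_dec U U); congruence.
      * destruct (F3 T HT) as [S [HS <-]]. exists S; split; simpl; auto.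
        destruct (classic_eq_dec S U); subst; try contradiction; auto.
Qed.

Definition countable_family P : Prop :=
  exists code : (X -> Prop) -> nat, forall S S', P S -> P S' -> code S = code S' -> S = S'.

Definition enumerable_family P : Prop :=
  exists (code : (X -> Prop) -> nat) (decode : nat -> (X -> Prop)),
    (forall S, P S -> decode (code S) = S) /\ (forall k, P (decode k) /\ code (decode k) = k).

Lemma enumerable_equipotent P Q : enumerable_family P -> enumerable_family Q -> equipotent P Q.
Proof.
  intros [c [d [H1 H2]]] [c' [d' [H1' H2']]].
  exists (fun S => d' (c S)). split; [|split].
  - intros; apply H2'.
  - intros S S' HS HS' E. apply seteq_eq in E.
    assert (c S = c S') by (rewrite <- (proj2 (H2' (c S))), <- (proj2 (H2' (c S'))), E; auto).
    rewrite <- (H1 S HS), <- (H1 S' HS'), H; apply seteq_refl.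
  - intros T HT. exists (d (c' T)). rewrite (proj2 (H2 _)), H1'; auto.
    split; [apply H2|apply seteq_refl].
Qed.

Lemma infinite_countable_enumerable P :
  countable_family P -> ~ finite_family P -> enumerable_family P.
Proof.
  intros [code Hcode] Hinf.
  set (A := fun k => exists S, P S /\ code S = k).
  assert (HA : forall k, exists x, A x /\ k <= x).
  { intros k. apply NNPP; intros Hno. apply Hinf.
    exists (map (fun j => epsilon (inhabits (fun _ : X => False)) (fun S => P S /\ code S = j))
              (seq 0 k)).
    intros S HS. exists S; split; [|apply seteq_refl].
    assert (Hlt : code S < k).
    { destruct (lt_dec (code S) k); auto.
      exfalso; apply Hno; exists (code S); split; [exists S|]; auto; lia. }
    apply in_map_iff. exists (code S); split; [|apply in_seq; lia].
    destruct (epsilon_spec (inhabits (fun _ : X => False)) (fun S' => P S' /\ code S' = code S)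
                (ex_intro _ S (conj HS eq_refl))) as [HS' E].
    apply Hcode; auto. }
  destruct (enumerate_unbounded A HA) as [en [Hen1 [Hen2 Hen3]]].
  assert (Hdec : forall k, exists S, P S /\ code S = en k) by (intros k; apply Hen1).
  set (decode := fun k => epsilon (inhabits (fun _ : X => False)) (fun S => P S /\ code S = en k)).
  assert (Hd : forall k, P (decode k) /\ code (decode k) = en k) by (intros k; apply epsilon_spec, Hdec).
  set (index := fun S => epsilon (inhabits 0) (fun i => en i = code S)).
  assert (Hi : forall S, P S -> en (index S) = code S).
  { intros S HS; apply epsilon_spec, Hen3. exists S; auto. }
  exists index, decode. split.
  - intros S HS. destruct (Hd (index S)) as [HP E]. apply Hcode; auto. rewrite E; apply Hi; auto.
  - intros k. destruct (Hd k) as [HP E]. split; auto. apply Hen2. rewrite Hi; auto.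
Qed.

Lemma family_card_equipotent P Q : countable_family P -> countable_family Q ->
  family_card P = family_card Q -> equipotent P Q.
Proof.
  intros CP CQ E. destruct (family_card P) as [n|] eqn:EP.
  - symmetry in E. apply family_card_Some in EP, E.
    destruct EP as [l [Hl [Hn HP]]], E as [l' [Hl' [Hm HQ]]].
    replace P with (fun S => In S l) by (apply seteq_eq; intros S; symmetry; apply HP).
    replace Q with (fun T => In T l') by (apply seteq_eq; intros T; symmetry; apply HQ).
    destruct (list_bijection l l' Hl Hl' ltac:(lia)) as [F HF].
    exact (family_bijection_equipotent _ _ F HF).
  - symmetry in E. apply family_card_None in EP, E.
    apply enumerable_equipotent; apply infinite_countable_enumerable; auto.
Qed.

End Families.

Lemma cycle_family_countable {X : Type} (f : X -> X) (P : (X -> Prop) -> Prop) :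
  countably_infinite X -> (forall S, P S -> is_cycle f S) -> countable_family P.
Proof.
  intros [e [He Hs]] HP. destruct (Hs 0) as [d _].
  exists (fun S => e (epsilon (inhabits d) S)). intros S S' HS HS' E. apply He in E.
  apply (cycles_meet_eq f S S' (epsilon (inhabits d) S)); auto.
  - apply epsilon_spec, (HP S HS).
  - rewrite E; apply epsilon_spec, (HP S' HS').
Qed.

Lemma cycle_families_equipotent_iff {X : Type} (f g : X -> X) (P Q : (X -> Prop) -> Prop) :
  countably_infinite X -> (forall S, P S -> is_cycle f S) -> (forall S, Q S -> is_cycle g S) ->
  equipotent P Q <-> family_card P = family_card Q.
Proof.
  intros HX HP HQ. split; [apply equipotent_family_card|].
  apply family_card_equipotent; eapply cycle_family_countable; eauto.
Qed.

Definition card_approx {X : Type} (f g : X -> X) : Prop :=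
  family_card (open_cycle f) = family_card (open_cycle g) /\
  family_card (forward_cycle f) = family_card (forward_cycle g) /\
  (exists N, forall n, N <= n -> family_card (cycle_of_size f n) = family_card (cycle_of_size g n)) /\
  (forall n, 1 <= n -> family_card (cycle_of_size f n) <> family_card (cycle_of_size g n) ->
     family_card (cycle_of_size f n) <> None /\ family_card (cycle_of_size g n) <> None).

Lemma approx_fin_iff_card_approx {X : Type} (f g : X -> X) :
  countably_infinite X -> approx_fin f g <-> card_approx f g.
Proof.
  intros HX.
  assert (Hsize : forall n, equipotent (cycle_of_size f n) (cycle_of_size g n) <->
            family_card (cycle_of_size f n) = family_card (cycle_of_size g n))
    by (intros n; apply (cycle_families_equipotent_iff f g); auto; intros S HS; apply HS).
  unfold approx_fin, card_approx.
  rewrite !(cycle_families_equipotent_iff f g _ _ HX) by (intros S HS; apply HS).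
  split; intros [A [B [[N HN] D]]]; split; auto; split; auto; split.
  - exists N; intros n Hn; apply Hsize; auto.
  - intros n Hn Hne. rewrite <- Hsize in Hne. destruct (D n Hn Hne) as [D1 D2].
    split; intros E; apply family_card_None in E; auto.
  - exists N; intros n Hn; apply Hsize; auto.
  - intros n Hn Hne. rewrite Hsize in Hne. destruct (D n Hn Hne) as [D1 D2].
    split; apply NNPP; intros E; [apply D1|apply D2]; apply family_card_None; auto.
Qed.

Lemma card_approx_sym {X : Type} (f g : X -> X) : card_approx f g -> card_approx g f.
Proof.
  intros [A [B [[N HN] D]]]. split; [auto|split; [auto|split]].
  - exists N; intros; symmetry; auto.
  - intros n Hn Hne. destruct (D n Hn); auto.
Qed.

Lemma card_approx_trans {X : Type} (f g h : X -> X) :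
  card_approx f g -> card_approx g h -> card_approx f h.
Proof.
  intros [A [B [[N HN] D]]] [A' [B' [[N' HN'] D']]]. split; [congruence|split; [congruence|split]].
  - exists (max N N'). intros n Hn. rewrite HN, HN'; auto; lia.
  - intros n Hn Hne.
    destruct (classic (family_card (cycle_of_size f n) = family_card (cycle_of_size g n))) as [E|E].
    + rewrite E in *. apply D'; auto.
    + destruct (D n Hn E) as [D1 D2]. split; auto.
      destruct (classic (family_card (cycle_of_size g n) = family_card (cycle_of_size h n))) as [E'|E'].
      * congruence.
      * apply (D' n Hn E').
Qed.

Section Perturbation.

Context {X : Type}.
Implicit Types (g p k kinv : X -> X) (S C D : X -> Prop).

Definition perturbation g p k kinv : Prop :=
  injective g /\ (forall a, kinv (k a) = a) /\ (forall a, k (kinv a) = a) /\ (forall a, p a = k (g a)).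

Definition moved k : X -> Prop := fun a => k a <> a.

Definition meets (K S : X -> Prop) : Prop := exists a, S a /\ K a.

Lemma perturbation_sym g p k kinv : perturbation g p k kinv -> perturbation p g kinv k.
Proof.
  intros [Hg [H1 [H2 H3]]]. split; [|split; [|split]]; auto.
  - intros a b E. rewrite !H3 in E. apply Hg. rewrite <- (H1 (g a)), <- (H1 (g b)), E; auto.
  - intros a; rewrite H3, H1; auto.
Qed.

Lemma perturbation_injective g p k kinv : perturbation g p k kinv -> injective p.
Proof. intros H; apply perturbation_sym in H; apply H. Qed.

Lemma moved_inverse k kinv : (forall a, kinv (k a) = a) -> (forall a, k (kinv a) = a) ->
  moved kinv = moved k.
Proof.
  intros H1 H2. apply seteq_eq; intros a; unfold moved; split; intros H E; apply H.
  - rewrite <- E at 1; auto.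
  - rewrite <- E at 1; auto.
Qed.

Lemma moved_image k kinv a : (forall a, kinv (k a) = a) -> moved k a -> moved k (k a).
Proof. intros H1 H E. apply H. rewrite <- (H1 (k a)), E, H1. reflexivity. Qed.

Lemma untouched_fixed k S a : ~ meets (moved k) S -> S a -> k a = a.
Proof. intros HS Sa. apply NNPP; intros E; apply HS; exists a; auto. Qed.

Lemma untouched_is_cycle g p k kinv S : perturbation g p k kinv -> ~ meets (moved k) S ->
  is_cycle g S -> is_cycle p S.
Proof.
  intros [_ [H1 [_ H3]]] HS [Hne [Hinv Hmin]].
  assert (Hpg : forall b, S b -> p b = g b).
  { intros b Sb. rewrite H3. apply (untouched_fixed k S); auto. apply Hinv; auto. }
  split; [auto|split].
  - intros b. split; intros Hb.
    + rewrite H3 in Hb. destruct (classic (moved k (g b))) as [E|E].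
      * exfalso. apply HS. exists (k (g b)); split; auto. apply (moved_image k kinv); auto.
      * apply NNPP in E. rewrite E in Hb. apply Hinv; auto.
    + rewrite Hpg; auto. apply Hinv; auto.
  - intros T HT Hsub HTinv. apply Hmin; auto. intros b.
    destruct (classic (S b)) as [Sb|Sb].
    + rewrite <- Hpg; auto.
    + split; intros H; exfalso; apply Sb; [apply Hinv|]; apply Hsub; auto.
Qed.

Lemma untouched_is_cycle_iff g p k kinv S : perturbation g p k kinv -> ~ meets (moved k) S ->
  is_cycle g S <-> is_cycle p S.
Proof.
  intros Hpt HS. split; [apply (untouched_is_cycle g p k kinv); auto|].
  apply (untouched_is_cycle p g kinv k); [apply perturbation_sym; auto|].
  destruct Hpt as [_ [H1 [H2 _]]]. rewrite (moved_inverse k kinv); auto.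
Qed.

Lemma untouched_no_preimage g p k kinv a : perturbation g p k kinv -> k a = a ->
  no_preimage g a <-> no_preimage p a.
Proof.
  intros [_ [H1 [_ H3]]] Ha. split; intros H b E.
  - rewrite H3 in E. apply (H b). rewrite <- (H1 (g b)), E, <- Ha, H1; auto.
  - apply (H b). rewrite H3, E; auto.
Qed.

Lemma untouched_point_without_preimage g p k kinv S : perturbation g p k kinv -> ~ meets (moved k) S ->
  (exists a, S a /\ forall b, g b <> a) <-> (exists a, S a /\ forall b, p b <> a).
Proof.
  intros Hpt HS. split; intros [a [Sa Ha]]; exists a; split; auto;
    apply (untouched_no_preimage g p k kinv a Hpt (untouched_fixed k S a HS Sa)); exact Ha.
Qed.

Lemma untouched_open_cycle g p k kinv S : perturbation g p k kinv -> ~ meets (moved k) S ->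
  open_cycle g S <-> open_cycle p S.
Proof.
  intros Hpt HS. unfold open_cycle, infinite_cycle.
  rewrite (untouched_is_cycle_iff g p k kinv S), (untouched_point_without_preimage g p k kinv S); tauto.
Qed.

Lemma untouched_forward_cycle g p k kinv S : perturbation g p k kinv -> ~ meets (moved k) S ->
  forward_cycle g S <-> forward_cycle p S.
Proof.
  intros Hpt HS. unfold forward_cycle, infinite_cycle.
  rewrite (untouched_is_cycle_iff g p k kinv S), (untouched_point_without_preimage g p k kinv S); tauto.
Qed.

Lemma untouched_cycle_of_size g p k kinv n S : perturbation g p k kinv -> ~ meets (moved k) S ->
  cycle_of_size g n S <-> cycle_of_size p n S.
Proof.
  intros Hpt HS. unfold cycle_of_size. rewrite (untouched_is_cycle_iff g p k kinv S); tauto.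
Qed.

Lemma untouched_cycle_eq g p k kinv C D a : perturbation g p k kinv ->
  is_cycle p D -> ~ meets (moved k) D -> is_cycle g C -> D a -> C a -> D = C.
Proof.
  intros Hpt HD HnD HC Da Ca. apply (cycles_meet_eq g D C a); auto.
  apply (untouched_is_cycle_iff g p k kinv); auto.
Qed.

Lemma meeting_cycles_finite (f : X -> X) (K : X -> Prop) : finite_set K ->
  finite_family (fun S => is_cycle f S /\ meets K S).
Proof.
  intros [L HL]. exists (map (orbit f) L). intros S [HS [a [Sa Ka]]].
  exists (orbit f a); split; [apply in_map; auto|]. rewrite <- (cycle_eq_orbit f S a); auto.
  apply seteq_refl.
Qed.

Lemma meeting_cycles_bounded_size (f : X -> X) (K : X -> Prop) : finite_set K ->
  exists N, forall n S, N <= n -> meets K S -> ~ cycle_of_size f n S.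
Proof.
  intros [L HL].
  assert (H : exists N, forall a, In a L -> forall n, cycle_of_size f n (orbit f a) -> n < N).
  { clear HL. induction L as [|a L [N HN]].
    - exists 0; intros a [].
    - destruct (classic (exists n, cycle_of_size f n (orbit f a))) as [[m Hm]|Hno].
      + exists (max N (S m)). intros b [<-|Hb] n Hn.
        * assert (n = m) by (eapply has_card_unique; [apply Hn|apply Hm]). lia.
        * specialize (HN b Hb n Hn); lia.
      + exists N. intros b [<-|Hb] n Hn; [exfalso; eauto|]. apply (HN b Hb n Hn). }
  destruct H as [N HN]. exists N. intros n S Hn [a [Sa Ka]] HS.
  rewrite (cycle_eq_orbit f S a) in HS; [|apply HS|auto].
  specialize (HN a (HL a Ka) n HS). lia.
Qed.

Definition escapes (f : X -> X) (K : X -> Prop) (y : X) : Prop := forall i, ~ K (Nat.iter i f y).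

Lemma escapes_iter (f : X -> X) (K : X -> Prop) x : injective f -> finite_set K -> aperiodic f x ->
  exists M, escapes f K (Nat.iter M f x).
Proof.
  intros Hf [L HL] Hx.
  assert (H : exists M, forall i, M <= i -> ~ In (Nat.iter i f x) L).
  { clear HL. induction L as [|z L [M HM]].
    - exists 0; intros i _ H; inversion H.
    - destruct (classic (exists j, Nat.iter j f x = z)) as [[j Hj]|Hno].
      + exists (max M (S j)). intros i Hi [E|E].
        * assert (i = j) by (apply (aperiodic_iter_inj f Hf x); auto; congruence). lia.
        * apply (HM i); auto; lia.
      + exists M. intros i Hi [E|E]; [apply Hno; eauto|apply (HM i); auto]. }
  destruct H as [M HM]. exists M. intros i Ki. apply (HM (i + M)); [lia|].
  rewrite Nat.iter_add; auto.
Qed.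

Lemma escapes_iter_eq g p k kinv y : perturbation g p k kinv ->
  escapes g (moved k) y -> forall i, Nat.iter i p y = Nat.iter i g y.
Proof.
  intros [_ [_ [_ H3]]] Hy i. induction i as [|i IH]; [reflexivity|].
  rewrite !Nat.iter_succ, IH, H3. apply NNPP; intros E. apply (Hy (S i)).
  rewrite Nat.iter_succ; exact E.
Qed.

Lemma escapes_perturbation g p k kinv y : perturbation g p k kinv ->
  escapes g (moved k) y -> escapes p (moved k) y.
Proof. intros Hpt Hy i. rewrite (escapes_iter_eq g p k kinv y Hpt Hy); auto. Qed.

Lemma escapes_orbit g p k kinv y y' : perturbation g p k kinv ->
  escapes g (moved k) y -> escapes g (moved k) y' -> orbit g y y' -> orbit p y y'.
Proof.
  intros Hpt Hy Hy' [m [n E]]. exists m, n.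
  rewrite !(escapes_iter_eq g p k kinv _ Hpt); auto.
Qed.

Lemma escaping_point_cycle g p k kinv y : perturbation g p k kinv ->
  aperiodic g y -> escapes g (moved k) y -> meets (moved k) (orbit g y) ->
  infinite_cycle p (orbit p y) /\ meets (moved k) (orbit p y).
Proof.
  intros Hpt Hy Hesc Hm. split.
  - apply (infinite_cycle_iff p (perturbation_injective g p k kinv Hpt)). exists y; split; auto.
    intros q Hq E. apply (Hy q Hq). rewrite <- (escapes_iter_eq g p k kinv y Hpt Hesc); auto.
  - apply NNPP; intros Hn. apply Hn.
    rewrite (untouched_cycle_eq g p k kinv (orbit g y) (orbit p y) y); auto using orbit_is_cycle, orbit_refl.
Qed.

(* Infinite cycles meeting the moved points correspond through a common point past which the
   forward orbit is never moved. *)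
Definition escape_related g p (K C D : X -> Prop) : Prop :=
  exists y, escapes g K y /\ escapes p K y /\ C = orbit g y /\ D = orbit p y.

Lemma escape_related_total g p k kinv C : perturbation g p k kinv -> finite_set (moved k) ->
  infinite_cycle g C -> meets (moved k) C ->
  exists D, (infinite_cycle p D /\ meets (moved k) D) /\ escape_related g p (moved k) C D.
Proof.
  intros Hpt HK HC Hm. pose proof Hpt as [Hg _].
  apply (infinite_cycle_iff g Hg) in HC as [x [-> Hx]].
  destruct (escapes_iter g (moved k) x Hg HK Hx) as [M HM].
  set (y := Nat.iter M g x) in *.
  assert (Ey : orbit g x = orbit g y) by apply orbit_eq, orbit_iter.
  assert (Hy : aperiodic g y) by (apply (aperiodic_orbit g Hg x); auto; apply orbit_iter).
  rewrite Ey in Hm |- *. exists (orbit p y). split.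
  - apply (escaping_point_cycle g p k kinv); auto.
  - exists y; repeat split; auto. apply (escapes_perturbation g p k kinv); auto.
Qed.

Lemma escape_related_functional g p k kinv C D D' : perturbation g p k kinv ->
  escape_related g p (moved k) C D -> escape_related g p (moved k) C D' -> D = D'.
Proof.
  intros Hpt [y [Hy [_ [-> ->]]]] [y' [Hy' [_ [E ->]]]].
  apply orbit_eq, (escapes_orbit g p k kinv); auto. rewrite E; apply orbit_refl.
Qed.

Lemma meeting_infinite_cycles_equipotent g p k kinv : perturbation g p k kinv ->
  finite_set (moved k) ->
  equipotent (fun S => infinite_cycle g S /\ meets (moved k) S)
             (fun S => infinite_cycle p S /\ meets (moved k) S).
Proof.
  intros Hpt HK. pose proof (perturbation_sym _ _ _ _ Hpt) as Hpt'.
  assert (Emoved : moved kinv = moved k) by (destruct Hpt as [_ [H1 [H2 _]]]; apply moved_inverse; auto).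
  assert (Hsym : forall C D, escape_related g p (moved k) C D <-> escape_related p g (moved k) D C).
  { intros C D; split; intros [y [H1 [H2 [H3 H4]]]]; exists y; auto. }
  apply (equipotent_of_bijective_relation _ _ (escape_related g p (moved k))).
  - intros C [HC Hm]. apply (escape_related_total g p k kinv); auto.
  - intros D [HD Hm]. rewrite <- Emoved in *.
    destruct (escape_related_total p g kinv k D Hpt' HK HD Hm) as [C [HC HR]].
    rewrite Emoved in *. exists C; split; auto. apply Hsym; auto.
  - intros C D D'. apply (escape_related_functional g p k kinv); auto.
  - intros C C' D HR HR'. rewrite Hsym in HR, HR'. rewrite <- Emoved in HR, HR'.
    apply (escape_related_functional p g kinv k D); auto.
Qed.

(* Forward cycles meeting the moved points correspond through their initial points. *)
Definition start_related g p k (C D : X -> Prop) : Prop :=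
  exists s, no_preimage g s /\ no_preimage p (k s) /\ C = orbit g s /\ D = orbit p (k s).

Lemma start_related_total g p k kinv C : perturbation g p k kinv ->
  forward_cycle g C -> meets (moved k) C ->
  exists D, (forward_cycle p D /\ meets (moved k) D) /\ start_related g p k C D.
Proof.
  intros Hpt HC Hm. pose proof Hpt as [Hg [H1 [H2 H3]]].
  apply (forward_cycle_iff g Hg) in HC as [s [-> Hs]].
  assert (Hks : no_preimage p (k s)).
  { intros b E. rewrite H3 in E. apply (Hs b). rewrite <- (H1 (g b)), E, H1; auto. }
  exists (orbit p (k s)). split; [split|exists s; auto].
  - apply (forward_cycle_iff p (perturbation_injective g p k kinv Hpt)); eauto.
  - destruct (classic (moved k s)) as [Hmv|Hfix].
    + exists (k s); split; [apply orbit_refl|apply (moved_image k kinv); auto].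
    + apply NNPP in Hfix. rewrite Hfix in *. apply NNPP; intros Hn. apply Hn.
      rewrite (untouched_cycle_eq g p k kinv (orbit g s) (orbit p s) s);
        auto using orbit_is_cycle, orbit_refl.
Qed.

Lemma start_related_functional g p k C D D' : injective g ->
  start_related g p k C D -> start_related g p k C D' -> D = D'.
Proof.
  intros Hg [s [Hs [_ [-> ->]]]] [s' [Hs' [_ [E ->]]]].
  rewrite (no_preimage_unique g Hg s s'); auto. rewrite E; apply orbit_refl.
Qed.

Lemma meeting_forward_cycles_equipotent g p k kinv : perturbation g p k kinv ->
  equipotent (fun S => forward_cycle g S /\ meets (moved k) S)
             (fun S => forward_cycle p S /\ meets (moved k) S).
Proof.
  intros Hpt. pose proof (perturbation_sym _ _ _ _ Hpt) as Hpt'.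
  pose proof Hpt as [Hg [H1 [H2 _]]].
  assert (Emoved : moved kinv = moved k) by (apply moved_inverse; auto).
  assert (Hsym : forall C D, start_related g p k C D <-> start_related p g kinv D C).
  { intros C D; split.
    - intros [s [Hs [Hks [HC HD]]]]. exists (k s). rewrite H1; auto.
    - intros [t [Ht [Hkt [HD HC]]]]. exists (kinv t). rewrite H2; auto. }
  apply (equipotent_of_bijective_relation _ _ (start_related g p k)).
  - intros C [HC Hm]. apply (start_related_total g p k kinv); auto.
  - intros D [HD Hm]. rewrite <- Emoved in *.
    destruct (start_related_total p g kinv k D Hpt' HD Hm) as [C [HC HR]].
    rewrite Emoved in *. exists C; split; auto. apply Hsym; auto.
  - intros C D D'. apply (start_related_functional g p k); auto.
  - intros C C' D HR HR'. rewrite Hsym in HR, HR'.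
    apply (start_related_functional p g kinv D); auto. apply (perturbation_injective g p k kinv Hpt).
Qed.

End Perturbation.

Section PerturbationCardinals.

Context {X : Type}.
Variables g p k kinv : X -> X.
Hypothesis Hpt : perturbation g p k kinv.
Hypothesis HK : finite_set (moved k).

Let M := meets (moved k).

Lemma meeting_subfamily_finite (f : X -> X) (P : (X -> Prop) -> Prop) :
  (forall S, P S -> is_cycle f S) -> finite_family (fun S => P S /\ M S).
Proof.
  intros HP. apply (finite_family_sub (fun S => is_cycle f S /\ M S)).
  - intros S [HS Hm]; auto.
  - apply meeting_cycles_finite; auto.
Qed.

Lemma meeting_infinite_cycles_card (f : X -> X) : exists a b,
  family_card (fun S => forward_cycle f S /\ M S) = Some a /\
  family_card (fun S => open_cycle f S /\ M S) = Some b /\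
  family_card (fun S => infinite_cycle f S /\ M S) = Some (a + b).
Proof.
  destruct (finite_family_card _ (meeting_subfamily_finite f (forward_cycle f) ltac:(intros S HS; apply HS)))
    as [a Ha].
  destruct (finite_family_card _ (meeting_subfamily_finite f (open_cycle f) ltac:(intros S HS; apply HS)))
    as [b Hb].
  exists a, b; split; [|split]; auto.
  apply (family_card_split _ (forward_cycle f)).
  - rewrite <- Ha; apply family_card_ext; intros S. unfold forward_cycle; tauto.
  - rewrite <- Hb; apply family_card_ext; intros S. unfold forward_cycle, open_cycle; tauto.
Qed.

Lemma meeting_forward_cycles_card :
  family_card (fun S => forward_cycle g S /\ M S) = family_card (fun S => forward_cycle p S /\ M S).
Proof. apply equipotent_family_card, (meeting_forward_cycles_equipotent g p k kinv Hpt). Qed.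

Lemma meeting_open_cycles_card :
  family_card (fun S => open_cycle g S /\ M S) = family_card (fun S => open_cycle p S /\ M S).
Proof.
  pose proof (equipotent_family_card _ _ (meeting_infinite_cycles_equipotent g p k kinv Hpt HK)) as Einf.
  pose proof meeting_forward_cycles_card as Efwd.
  destruct (meeting_infinite_cycles_card g) as [a [b [Ha [Hb Hab]]]].
  destruct (meeting_infinite_cycles_card p) as [a' [b' [Ha' [Hb' Hab']]]].
  fold M in Einf. rewrite Hb, Hb'. rewrite Ha, Ha' in Efwd. rewrite Hab, Hab' in Einf.
  injection Efwd; injection Einf; intros; f_equal; lia.
Qed.

Lemma perturbation_open_cycles_card : family_card (open_cycle g) = family_card (open_cycle p).
Proof.
  apply (family_card_agree _ _ M).
  - intros S HS. apply (untouched_open_cycle g p k kinv); auto.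
  - apply meeting_open_cycles_card.
  - apply (meeting_subfamily_finite g). intros S HS; apply HS.
Qed.

Lemma perturbation_forward_cycles_card : family_card (forward_cycle g) = family_card (forward_cycle p).
Proof.
  apply (family_card_agree _ _ M).
  - intros S HS. apply (untouched_forward_cycle g p k kinv); auto.
  - apply meeting_forward_cycles_card.
  - apply (meeting_subfamily_finite g). intros S HS; apply HS.
Qed.

Lemma perturbation_cycles_of_size_card_eventually : exists N, forall n, N <= n ->
  family_card (cycle_of_size g n) = family_card (cycle_of_size p n).
Proof.
  destruct (meeting_cycles_bounded_size g (moved k) HK) as [Ng HNg].
  destruct (meeting_cycles_bounded_size p (moved k) HK) as [Np HNp].
  exists (max Ng Np). intros n Hn. apply family_card_ext. intros S.
  destruct (classic (M S)) as [Hm|Hm].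
  - split; intros HS; exfalso; [apply (HNg n S)|apply (HNp n S)]; auto; lia.
  - apply (untouched_cycle_of_size g p k kinv); auto.
Qed.

Lemma perturbation_cycles_of_size_infinite n :
  family_card (cycle_of_size g n) = None <-> family_card (cycle_of_size p n) = None.
Proof.
  assert (Hag : forall S, ~ M S -> (cycle_of_size g n S <-> cycle_of_size p n S))
    by (intros S HS; apply (untouched_cycle_of_size g p k kinv); auto).
  split; apply family_card_None_agree with (D := M).
  - exact Hag.
  - apply (meeting_subfamily_finite g). intros S HS; apply HS.
  - intros S HS; symmetry; apply Hag; auto.
  - apply (meeting_subfamily_finite p). intros S HS; apply HS.
Qed.

Lemma perturbation_card_approx : card_approx g p.
Proof.
  split; [apply perturbation_open_cycles_card|split; [apply perturbation_forward_cycles_card|split]].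
  - apply perturbation_cycles_of_size_card_eventually.
  - intros n _ Hne. rewrite <- (perturbation_cycles_of_size_infinite n).
    split; intros HN; apply Hne; rewrite HN; symmetry; apply perturbation_cycles_of_size_infinite; auto.
Qed.

End PerturbationCardinals.

Section FinitePerturbation.

Context {X : Type}.

Definition finite_perturbation (g q : X -> X) : Prop :=
  exists k kinv, perturbation g q k kinv /\ finite_set (moved k).

Lemma finite_perturbation_refl (g : X -> X) : injective g -> finite_perturbation g g.
Proof.
  intros Hg. exists (fun a => a), (fun a => a). split; [repeat split; auto|].
  exists []. intros a H; exfalso; apply H; reflexivity.
Qed.

Lemma finite_perturbation_trans (g q r : X -> X) :
  finite_perturbation g q -> finite_perturbation q r -> finite_perturbation g r.
Proof.
  intros [k [kinv [[Hg [H1 [H2 H3]]] [L HL]]]] [k' [kinv' [[Hq [H1' [H2' H3']]] [L' HL']]]].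
  exists (fun a => k' (k a)), (fun a => kinv (kinv' a)). split; [repeat split|].
  - exact Hg.
  - intros a; rewrite H1', H1; auto.
  - intros a; rewrite H2, H2'; auto.
  - intros a; rewrite H3', H3; auto.
  - exists (L ++ L'). intros a Ha. apply in_or_app. destruct (classic (k a = a)) as [E|E].
    + right; apply HL'. unfold moved in *; rewrite E in Ha; auto.
    + left; apply HL; auto.
Qed.

Lemma finite_perturbation_injective (g q : X -> X) : finite_perturbation g q -> injective q.
Proof. intros [k [kinv [Hpt _]]]. eapply perturbation_injective; eauto. Qed.

Lemma finite_perturbation_card_approx (g q : X -> X) : finite_perturbation g q -> card_approx g q.
Proof. intros [k [kinv [Hpt HK]]]. eapply perturbation_card_approx; eauto. Qed.

Definition swap (x y a : X) : X :=
  if classic_eq_dec a x then y else if classic_eq_dec a y then x else a.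

Lemma swap_l x y : swap x y x = y.
Proof. unfold swap; destruct (classic_eq_dec x x); congruence. Qed.

Lemma swap_r x y : swap x y y = x.
Proof. unfold swap; destruct (classic_eq_dec y x); destruct (classic_eq_dec y y); congruence. Qed.

Lemma swap_other x y a : a <> x -> a <> y -> swap x y a = a.
Proof. unfold swap; intros; destruct (classic_eq_dec a x); destruct (classic_eq_dec a y); congruence. Qed.

Lemma swap_involutive x y a : swap x y (swap x y a) = a.
Proof.
  unfold swap; destruct (classic_eq_dec a x); destruct (classic_eq_dec a y); subst;
    repeat destruct (classic_eq_dec _ _); congruence.
Qed.

Lemma moved_swap x y a : moved (swap x y) a -> a = x \/ a = y.
Proof.
  intros H. destruct (classic_eq_dec a x); [auto|]. destruct (classic_eq_dec a y); [auto|].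
  exfalso; apply H, swap_other; auto.
Qed.

Lemma meets_moved_swap x y S : x <> y -> meets (moved (swap x y)) S <-> S x \/ S y.
Proof.
  intros Hxy; split.
  - intros [a [Sa Ha]]. apply moved_swap in Ha as [-> | ->]; auto.
  - intros [Sx|Sy]; [exists x|exists y]; split; auto; unfold moved.
    + rewrite swap_l; auto.
    + rewrite swap_r; auto.
Qed.

Definition swap_after (g : X -> X) (x y : X) : X -> X := fun a => swap x y (g a).

Lemma swap_perturbation (g : X -> X) x y : injective g ->
  perturbation g (swap_after g x y) (swap x y) (swap x y).
Proof. intros Hg; repeat split; auto; intros; apply swap_involutive. Qed.

Lemma swap_finite_perturbation (g : X -> X) x y : injective g ->
  finite_perturbation g (swap_after g x y).
Proof.
  intros Hg. exists (swap x y), (swap x y). split; [apply swap_perturbation; auto|].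
  exists [x; y]. intros a Ha. apply moved_swap in Ha as [-> | ->]; simpl; auto.
Qed.

End FinitePerturbation.

Section Conjugacy.

Context {X : Type}.
Implicit Types (f q H Hinv : X -> X) (S : X -> Prop).

Definition conjugate f q H Hinv : Prop :=
  (forall a, Hinv (H a) = a) /\ (forall a, H (Hinv a) = a) /\ (forall a, f a = Hinv (q (H a))).

(* The image of [S] under [H], when [Hinv] is the inverse of [H]. *)
Definition preimage Hinv S : X -> Prop := fun b => S (Hinv b).

Lemma conjugate_sym f q H Hinv : conjugate f q H Hinv -> conjugate q f Hinv H.
Proof. intros [H1 [H2 H3]]; split; auto; split; auto. intros a. rewrite H3, !H2; auto. Qed.

Lemma conjugate_injective f q H Hinv : conjugate f q H Hinv -> injective Hinv.
Proof. intros [_ [H2 _]] a b E. rewrite <- (H2 a), E, H2; auto. Qed.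

Lemma conjugate_iter f q H Hinv n a : conjugate f q H Hinv ->
  Nat.iter n f a = Hinv (Nat.iter n q (H a)).
Proof.
  intros [H1 [H2 H3]]; induction n as [|n IH].
  - symmetry; apply H1.
  - rewrite !Nat.iter_succ, IH, H3, H2; auto.
Qed.

Lemma conjugate_orbit f q H Hinv a c : conjugate f q H Hinv -> orbit f a c -> orbit q (H a) (H c).
Proof.
  intros Hc [m [n E]]. exists m, n. rewrite !(conjugate_iter f q H Hinv) in E; auto.
  exact (conjugate_injective f q H Hinv Hc _ _ E).
Qed.

Lemma preimage_preimage f q H Hinv S : conjugate f q H Hinv -> preimage H (preimage Hinv S) = S.
Proof. intros [H1 _]. apply seteq_eq; intros a; unfold preimage; rewrite H1; reflexivity. Qed.

Lemma conjugate_is_cycle f q H Hinv S : conjugate f q H Hinv ->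
  is_cycle f S -> is_cycle q (preimage Hinv S).
Proof.
  intros Hc HS. apply is_cycle_iff in HS as [a ->]. apply is_cycle_iff. exists (H a).
  pose proof Hc as [H1 [H2 _]].
  apply seteq_eq; intros b; unfold preimage; split; intros Hb.
  - rewrite <- (H2 b). apply (conjugate_orbit f q H Hinv); auto.
  - rewrite <- (H1 a). apply (conjugate_orbit q f Hinv H); auto using conjugate_sym.
Qed.

Lemma conjugate_has_card f q H Hinv S n : conjugate f q H Hinv ->
  has_card S n -> has_card (preimage Hinv S) n.
Proof.
  intros [H1 [H2 _]] [l [Hl [<- HS]]]. exists (map H l). split; [|split].
  - apply NoDup_map_NoDup_ForallPairs; auto. intros x y _ _ E. rewrite <- (H1 x), E, H1; auto.
  - apply length_map.
  - intros b; unfold preimage. rewrite HS, in_map_iff. split.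
    + intros Hb; exists (Hinv b); auto.
    + intros [a [<- Ha]]. rewrite H1; auto.
Qed.

Lemma conjugate_finite f q H Hinv S : conjugate f q H Hinv ->
  finite_set S -> finite_set (preimage Hinv S).
Proof.
  intros [_ [H2 _]] [l Hl]. exists (map H l). intros b Hb. rewrite <- (H2 b). apply in_map, Hl, Hb.
Qed.

Lemma conjugate_point_without_preimage f q H Hinv S : conjugate f q H Hinv ->
  (exists a, S a /\ forall b, f b <> a) -> (exists a, preimage Hinv S a /\ forall b, q b <> a).
Proof.
  intros [H1 [H2 H3]] [a [Sa Ha]]. exists (H a). unfold preimage; rewrite H1; split; auto.
  intros b E. apply (Ha (Hinv b)). rewrite H3, H2, E, H1; auto.
Qed.

Lemma conjugate_open_cycle f q H Hinv S : conjugate f q H Hinv ->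
  open_cycle f S -> open_cycle q (preimage Hinv S).
Proof.
  intros Hc [[HS Hinf] Hpre]. split; [split|].
  - apply (conjugate_is_cycle f q H Hinv); auto.
  - intros Hfin. apply Hinf. rewrite <- (preimage_preimage f q H Hinv S Hc).
    apply (conjugate_finite q f Hinv H); auto using conjugate_sym.
  - intros Hp. apply Hpre. rewrite <- (preimage_preimage f q H Hinv S Hc).
    apply (conjugate_point_without_preimage q f Hinv H); auto using conjugate_sym.
Qed.

Lemma conjugate_forward_cycle f q H Hinv S : conjugate f q H Hinv ->
  forward_cycle f S -> forward_cycle q (preimage Hinv S).
Proof.
  intros Hc [[HS Hinf] Hpre]. split; [split|].
  - apply (conjugate_is_cycle f q H Hinv); auto.
  - intros Hfin. apply Hinf. rewrite <- (preimage_preimage f q H Hinv S Hc).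
    apply (conjugate_finite q f Hinv H); auto using conjugate_sym.
  - apply (conjugate_point_without_preimage f q H Hinv); auto.
Qed.

Lemma conjugate_cycle_of_size f q H Hinv n S : conjugate f q H Hinv ->
  cycle_of_size f n S -> cycle_of_size q n (preimage Hinv S).
Proof.
  intros Hc [HS Hn].
  split; [apply (conjugate_is_cycle f q H Hinv)|apply (conjugate_has_card f q H Hinv)]; auto.
Qed.

Lemma conjugate_family_card f q H Hinv (Phi : (X -> X) -> (X -> Prop) -> Prop) :
  conjugate f q H Hinv ->
  (forall f q H Hinv S, conjugate f q H Hinv -> Phi f S -> Phi q (preimage Hinv S)) ->
  family_card (Phi f) = family_card (Phi q).
Proof.
  intros Hc Htr. apply equipotent_family_card. exists (preimage Hinv). split; [|split].
  - intros S HS; apply (Htr f q H Hinv); auto.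
  - intros S S' _ _ E. apply seteq_eq in E.
    rewrite <- (preimage_preimage f q H Hinv S Hc), <- (preimage_preimage f q H Hinv S' Hc), E.
    apply seteq_refl.
  - intros T HT. exists (preimage H T). rewrite (preimage_preimage q f Hinv H T (conjugate_sym _ _ _ _ Hc)).
    split; [apply (Htr q f Hinv H); auto using conjugate_sym|apply seteq_refl].
Qed.

Lemma conjugate_card_approx f q H Hinv : conjugate f q H Hinv -> card_approx f q.
Proof.
  intros Hc.
  assert (Hsize : forall n, family_card (cycle_of_size f n) = family_card (cycle_of_size q n))
    by (intros n; apply (conjugate_family_card f q H Hinv (fun h => cycle_of_size h n)); auto;
        intros; eapply conjugate_cycle_of_size; eauto).
  split; [|split; [|split]].
  - apply (conjugate_family_card f q H Hinv open_cycle); auto. intros; eapply conjugate_open_cycle; eauto.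
  - apply (conjugate_family_card f q H Hinv forward_cycle); auto.
    intros; eapply conjugate_forward_cycle; eauto.
  - exists 0; auto.
  - intros n _ Hne; exfalso; apply Hne, Hsize.
Qed.

End Conjugacy.

Section ShapeMatch.

Context {X : Type}.
Implicit Types (f q : X -> X).

Definition same_shape f (a : X) q (a' : X) : Prop :=
  (forall m n, Nat.iter m f a = Nat.iter n f a <-> Nat.iter m q a' = Nat.iter n q a') /\
  (forall m n, (exists b, Nat.iter m f a = Nat.iter n f b) <-> (exists c, Nat.iter m q a' = Nat.iter n q c)).

(* [b] and [c] occupy the same position relative to the base points [a] and [a']. *)
Definition shape_match f q (a a' b c : X) : Prop :=
  exists m n, Nat.iter m f a = Nat.iter n f b /\ Nat.iter m q a' = Nat.iter n q c.

Lemma same_shape_sym f q a a' : same_shape f a q a' -> same_shape q a' f a.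
Proof. intros [H1 H2]; split; intros m n; [rewrite H1|rewrite H2]; reflexivity. Qed.

Lemma shape_match_sym f q a a' b c : shape_match f q a a' b c -> shape_match q f a' a c b.
Proof. intros [m [n [H1 H2]]]; exists m, n; auto. Qed.

Lemma shape_match_functional f q a a' b c c' : injective q -> same_shape f a q a' ->
  shape_match f q a a' b c -> shape_match f q a a' b c' -> c = c'.
Proof.
  intros Hq [Hiter _] [m [n [E1 E2]]] [m' [n' [E1' E2']]].
  assert (Ef : Nat.iter (n' + m) f a = Nat.iter (n + m') f a).
  { rewrite !Nat.iter_add, E1, E1', !(iter_comm f n' n). reflexivity. }
  apply Hiter in Ef. apply (iter_inj q Hq (n + n')).
  transitivity (Nat.iter (n' + m) q a').
  - replace (n + n') with (n' + n) by lia. rewrite Nat.iter_add, <- E2, <- Nat.iter_add. reflexivity.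
  - rewrite Ef, Nat.iter_add, E2'. symmetry; apply Nat.iter_add.
Qed.

Lemma shape_match_injective f q a a' b b' c : injective f -> same_shape f a q a' ->
  shape_match f q a a' b c -> shape_match f q a a' b' c -> b = b'.
Proof.
  intros Hf Hs H1 H2. apply shape_match_sym in H1, H2.
  exact (shape_match_functional q f a' a c b b' Hf (same_shape_sym _ _ _ _ Hs) H1 H2).
Qed.

Lemma shape_match_total f q a a' b : same_shape f a q a' -> orbit f a b ->
  exists c, shape_match f q a a' b c.
Proof.
  intros [_ Hreach] [m [n E]]. destruct (proj1 (Hreach m n) (ex_intro _ b E)) as [c Ec].
  exists c, m, n; auto.
Qed.

Lemma shape_match_step f q a a' b c : shape_match f q a a' b c -> shape_match f q a a' (f b) (q c).
Proof.
  intros [m [n [E1 E2]]]. exists (S m), n.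
  rewrite !Nat.iter_succ, !Nat.iter_swap, E1, E2; auto.
Qed.

Lemma shape_match_orbit f q a a' b c : shape_match f q a a' b c -> orbit f a b /\ orbit q a' c.
Proof. intros [m [n [E1 E2]]]; split; exists m, n; auto. Qed.


End ShapeMatch.

Section Gluing.

Context {X : Type}.
Variables (f q : X -> X) (Phi : (X -> Prop) -> (X -> Prop)).
Hypothesis Hinh : inhabited X.
Hypotheses (Hf : injective f) (Hq : injective q).
Hypothesis Phi_cycle : forall C, is_cycle f C -> is_cycle q (Phi C).
Hypothesis Phi_inj : forall C C', is_cycle f C -> is_cycle f C' -> Phi C = Phi C' -> C = C'.
Hypothesis Phi_surj : forall D, is_cycle q D -> exists C, is_cycle f C /\ Phi C = D.
Hypothesis Phi_shape : forall C, is_cycle f C ->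
  exists a a', C a /\ Phi C a' /\ same_shape f a q a'.

Let base_f C := epsilon Hinh (fun a => C a /\ exists a', Phi C a' /\ same_shape f a q a').
Let base_q C := epsilon Hinh (fun a' => Phi C a' /\ same_shape f (base_f C) q a').

Lemma base_spec C : is_cycle f C ->
  C (base_f C) /\ Phi C (base_q C) /\ same_shape f (base_f C) q (base_q C).
Proof.
  intros HC. destruct (Phi_shape C HC) as [a [a' [Ca [Ha' Hs]]]].
  assert (Hb : C (base_f C) /\ exists a', Phi C a' /\ same_shape f (base_f C) q a')
    by (apply epsilon_spec; eauto).
  destruct Hb as [Hb Hex].
  assert (Hb' : Phi C (base_q C) /\ same_shape f (base_f C) q (base_q C)) by (apply epsilon_spec, Hex).
  tauto.
Qed.

(* Points of [f] and [q] are matched cycle by cycle, relative to the chosen base points. *)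
Let rel b c := shape_match f q (base_f (orbit f b)) (base_q (orbit f b)) b c.

Lemma glue_base_orbit b : orbit f (base_f (orbit f b)) b.
Proof. apply orbit_sym, (base_spec (orbit f b) (orbit_is_cycle f b)). Qed.

Lemma glue_rel_total b : exists c, rel b c.
Proof.
  apply shape_match_total; [apply (base_spec (orbit f b) (orbit_is_cycle f b))|apply glue_base_orbit].
Qed.

Lemma glue_rel_functional b c c' : rel b c -> rel b c' -> c = c'.
Proof. apply shape_match_functional; auto. apply (base_spec (orbit f b) (orbit_is_cycle f b)). Qed.

Lemma glue_rel_step b c : rel b c -> rel (f b) (q c).
Proof.
  intros H. unfold rel. rewrite <- (orbit_eq f b (f b) (orbit_iter f b 1)). apply shape_match_step, H.
Qed.

Lemma glue_rel_cycle b c : rel b c -> Phi (orbit f b) c.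
Proof.
  intros H. destruct (base_spec (orbit f b) (orbit_is_cycle f b)) as [_ [Hb _]].
  apply (invariant_orbit q _ (base_q (orbit f b))); auto.
  - exact (proj1 (proj2 (Phi_cycle _ (orbit_is_cycle f b)))).
  - exact (proj2 (shape_match_orbit _ _ _ _ _ _ H)).
Qed.

Lemma glue_rel_injective b b' c : rel b c -> rel b' c -> b = b'.
Proof.
  intros H H'.
  assert (E : orbit f b = orbit f b').
  { apply Phi_inj; try apply orbit_is_cycle.
    apply (cycles_meet_eq q _ _ c); try apply Phi_cycle, orbit_is_cycle; apply glue_rel_cycle; auto. }
  unfold rel in H'. rewrite <- E in H'.
  apply (shape_match_injective f q (base_f (orbit f b)) (base_q (orbit f b)) b b' c Hf); auto.
  apply (base_spec (orbit f b) (orbit_is_cycle f b)).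
Qed.

Lemma glue_rel_surjective c : exists b, rel b c.
Proof.
  destruct (Phi_surj (orbit q c) (orbit_is_cycle q c)) as [C [HC EC]].
  destruct (base_spec C HC) as [Hb [Hb' Hs]]. rewrite EC in Hb'.
  destruct (shape_match_total q f (base_q C) (base_f C) c (same_shape_sym _ _ _ _ Hs))
    as [b Hbc]; [apply orbit_sym, Hb'|].
  apply shape_match_sym in Hbc. exists b. unfold rel.
  replace (orbit f b) with C; auto.
  rewrite (cycle_eq_orbit f C _ HC Hb). apply orbit_eq, (shape_match_orbit _ _ _ _ _ _ Hbc).
Qed.

Theorem conjugate_of_cycle_matching : exists H Hinv, conjugate f q H Hinv.
Proof.
  set (H := fun b => epsilon Hinh (rel b)).
  set (Hinv := fun c => epsilon Hinh (fun b => rel b c)).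
  assert (HH : forall b, rel b (H b)) by (intros b; apply epsilon_spec, glue_rel_total).
  assert (HHinv : forall c, rel (Hinv c) c) by (intros c; apply epsilon_spec, glue_rel_surjective).
  assert (K1 : forall b, Hinv (H b) = b) by (intros b; exact (glue_rel_injective _ _ _ (HHinv (H b)) (HH b))).
  exists H, Hinv. split; [exact K1|split].
  - intros c. exact (glue_rel_functional _ _ _ (HH (Hinv c)) (HHinv c)).
  - intros a. rewrite <- (K1 (f a)). f_equal.
    exact (glue_rel_functional _ _ _ (HH (f a)) (glue_rel_step _ _ (HH a))).
Qed.

End Gluing.

Inductive cycle_kind := Open | Forward | Finite (n : nat).

Definition has_kind {X : Type} (f : X -> X) (C : X -> Prop) (t : cycle_kind) : Prop :=
  match t with
  | Open => open_cycle f C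
  | Forward => forward_cycle f C
  | Finite n => cycle_of_size f n C
  end.

(* When [Nat.iter m f a = Nat.iter n f a], for a base point [a] of a cycle of kind [t]. *)
Definition kind_iter_eq (t : cycle_kind) (m n : nat) : Prop :=
  match t with Finite k => m mod k = n mod k | _ => m = n end.

(* When [Nat.iter m f a] has an [n]-th preimage, for a base point [a] of a cycle of kind [t]. *)
Definition kind_reaches (t : cycle_kind) (m n : nat) : Prop :=
  match t with Forward => n <= m | _ => True end.

Section Kinds.

Context {X : Type}.
Variable f : X -> X.
Hypothesis Hf : injective f.

Lemma has_kind_is_cycle C t : has_kind f C t -> is_cycle f C.
Proof. destruct t; intros H; apply H. Qed.

Lemma has_kind_unique C t t' : has_kind f C t -> has_kind f C t' -> t = t'.
Proof.
  assert (Hfin : forall n, cycle_of_size f n C -> finite_set C)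
    by (intros n H; exact (has_card_finite _ _ (proj2 H))).
  destruct t as [| |k], t' as [| |k']; simpl; unfold open_cycle, forward_cycle, infinite_cycle;
    intros H H'; try tauto; try (exfalso; eapply (proj2 (proj1 H)), Hfin; eauto; fail);
    try (exfalso; eapply (proj2 (proj1 H')), Hfin; eauto; fail).
  f_equal. exact (has_card_unique _ _ _ (proj2 H) (proj2 H')).
Qed.

Lemma has_kind_exists C : is_cycle f C -> exists t, has_kind f C t.
Proof.
  intros HC. destruct (classic (finite_set C)) as [Hfin|Hinf].
  - destruct (proj1 HC) as [a Ca]. rewrite (cycle_eq_orbit f C a HC Ca) in *.
    destruct (finite_orbit_least_period f Hf a Hfin) as [k Hk].
    exists (Finite k). apply (cycle_of_size_iff f Hf). eauto.
  - destruct (classic (exists a, C a /\ forall b, f b <> a)).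
    + exists Forward. split; [split|]; auto.
    + exists Open. split; [split|]; auto.
Qed.

Lemma has_kind_base C t : has_kind f C t -> exists a, C a /\ (t = Forward -> no_preimage f a).
Proof.
  intros H. destruct t; try (destruct (proj1 (has_kind_is_cycle C _ H)) as [a Ca]; exists a; split;
    [exact Ca|discriminate]).
  destruct H as [_ [a [Ca Ha]]]. exists a; auto.
Qed.

Lemma open_cycle_preimage C : open_cycle f C -> forall n c, C c -> exists b, Nat.iter n f b = c.
Proof.
  intros [[[_ [Hinv _]] _] Hno] n. induction n as [|n IH]; intros c Cc; [exists c; reflexivity|].
  assert (Hc : exists c1, f c1 = c).
  { apply NNPP; intros Hn. apply Hno. exists c; split; auto. intros b E; apply Hn; eauto. }
  destruct Hc as [c1 <-]. destruct (IH c1 (proj1 (Hinv c1) Cc)) as [b <-].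
  exists b. rewrite Nat.iter_succ; reflexivity.
Qed.

Lemma open_cycle_shape C a : open_cycle f C -> C a ->
  (forall m n, Nat.iter m f a = Nat.iter n f a <-> m = n) /\
  (forall m n, exists b, Nat.iter m f a = Nat.iter n f b).
Proof.
  intros HC Ca. pose proof HC as [[HS Hinf] _].
  rewrite (cycle_eq_orbit f C a HS Ca) in Hinf. apply (aperiodic_iff_infinite f Hf) in Hinf.
  split.
  - intros m n; split; [apply (aperiodic_iter_inj f Hf); auto|intros ->; reflexivity].
  - intros m n. destruct (open_cycle_preimage C HC n (Nat.iter m f a)) as [b Hb].
    + apply (invariant_iter f C (proj1 (proj2 HS))); auto.
    + exists b; auto.
Qed.

Lemma no_preimage_shape a : no_preimage f a ->
  (forall m n, Nat.iter m f a = Nat.iter n f a <-> m = n) /\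
  (forall m n, (exists b, Nat.iter m f a = Nat.iter n f b) <-> n <= m).
Proof.
  intros Ha. split.
  - intros m n; split; [apply (no_preimage_iter f Hf); auto|intros ->; reflexivity].
  - intros m n; split.
    + intros [b E]. exact (no_preimage_reach f Hf a m n b Ha E).
    + intros Hl. exists (Nat.iter (m - n) f a). rewrite <- Nat.iter_add. f_equal; lia.
Qed.

Lemma least_period_shape a k : least_period f a k ->
  (forall m n, Nat.iter m f a = Nat.iter n f a <-> m mod k = n mod k) /\
  (forall m n, exists b, Nat.iter m f a = Nat.iter n f b).
Proof.
  intros Hk. pose proof Hk as [Hk0 [Hka _]]. split.
  - intros m n. rewrite (iter_period_mod f a k m Hk0 Hka), (iter_period_mod f a k n Hk0 Hka).
    split; [|intros ->; reflexivity].
    apply (least_period_iter_inj f Hf a k _ _ Hk); apply Nat.mod_upper_bound; lia.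
  - intros m n. exists (Nat.iter (k * n - n + m) f a).
    rewrite <- Nat.iter_add. replace (n + (k * n - n + m)) with (m + n * k) by nia.
    rewrite Nat.iter_add, iter_period_mul; auto.
Qed.

Lemma has_kind_shape C t a : has_kind f C t -> C a -> (t = Forward -> no_preimage f a) ->
  (forall m n, Nat.iter m f a = Nat.iter n f a <-> kind_iter_eq t m n) /\
  (forall m n, (exists b, Nat.iter m f a = Nat.iter n f b) <-> kind_reaches t m n).
Proof.
  intros Ht Ca Hfa. destruct t as [| |k]; simpl in *.
  - destruct (open_cycle_shape C a Ht Ca) as [H1 H2]. split; auto. intros m n; split; auto.
  - apply no_preimage_shape, Hfa; reflexivity.
  - apply (cycle_of_size_iff f Hf) in Ht as [a0 [-> H0]].
    destruct (least_period_shape a k (least_period_orbit f Hf a0 a k H0 Ca)) as [H1 H2].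
    split; auto. intros m n; split; auto.
Qed.

End Kinds.

Lemma same_kind_same_shape {X : Type} (f q : X -> X) C D t a a' : injective f -> injective q ->
  has_kind f C t -> has_kind q D t -> C a -> (t = Forward -> no_preimage f a) ->
  D a' -> (t = Forward -> no_preimage q a') -> same_shape f a q a'.
Proof.
  intros Hf Hq HC HD Ca Ha Da' Ha'.
  destruct (has_kind_shape f Hf C t a HC Ca Ha) as [D1 E1].
  destruct (has_kind_shape q Hq D t a' HD Da' Ha') as [D2 E2].
  split; intros m n; [rewrite D1, D2|rewrite E1, E2]; reflexivity.
Qed.

Section KindConjugacy.

Context {X : Type}.
Variables f q : X -> X.
Hypotheses (Hinh : inhabited X) (Hf : injective f) (Hq : injective q).
Hypothesis Hkinds : forall t, equipotent (fun C => has_kind f C t) (fun C => has_kind q C t).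

Let F t := epsilon (inhabits (fun S : X -> Prop => S))
             (family_bijection (fun C => has_kind f C t) (fun C => has_kind q C t)).
Let kind C := epsilon (inhabits Open) (has_kind f C).
Let Phi C := F (kind C) C.

Lemma kind_bijection_spec t : family_bijection (fun C => has_kind f C t) (fun C => has_kind q C t) (F t).
Proof. apply epsilon_spec, equipotent_family_bijection, Hkinds. Qed.

Lemma kind_spec C : is_cycle f C -> has_kind f C (kind C).
Proof. intros HC; apply epsilon_spec, has_kind_exists; auto. Qed.

Lemma kind_matching_kind C : is_cycle f C -> has_kind q (Phi C) (kind C).
Proof. intros HC. apply (kind_bijection_spec (kind C)), kind_spec, HC. Qed.

Lemma kind_matching_cycle C : is_cycle f C -> is_cycle q (Phi C).
Proof. intros HC. exact (has_kind_is_cycle q _ _ (kind_matching_kind C HC)). Qed.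

Lemma kind_matching_injective C C' : is_cycle f C -> is_cycle f C' -> Phi C = Phi C' -> C = C'.
Proof.
  intros HC HC' E. pose proof (kind_matching_kind C HC) as T. pose proof (kind_matching_kind C' HC') as T'.
  rewrite E in T. pose proof (has_kind_unique q _ _ _ T T') as Et.
  unfold Phi in E. rewrite Et in E.
  apply (proj1 (proj2 (kind_bijection_spec (kind C')))); auto; [rewrite <- Et|]; apply kind_spec; auto.
Qed.

Lemma kind_matching_surjective D : is_cycle q D -> exists C, is_cycle f C /\ Phi C = D.
Proof.
  intros HD. destruct (has_kind_exists q Hq D HD) as [t Ht].
  destruct (proj2 (proj2 (kind_bijection_spec t)) D Ht) as [C [HC E]].
  pose proof (has_kind_is_cycle f _ _ HC) as HCc.
  exists C. split; auto. unfold Phi.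
  rewrite (has_kind_unique f C (kind C) t); auto. apply kind_spec; auto.
Qed.

Lemma kind_matching_shape C : is_cycle f C -> exists a a', C a /\ Phi C a' /\ same_shape f a q a'.
Proof.
  intros HC. pose proof (kind_spec C HC) as T. pose proof (kind_matching_kind C HC) as T'.
  destruct (has_kind_base f C _ T) as [a [Ca Ha]]. destruct (has_kind_base q _ _ T') as [a' [Ca' Ha']].
  exists a, a'. split; [|split]; auto. apply (same_kind_same_shape f q C (Phi C) (kind C)); auto.
Qed.

Theorem conjugate_of_kinds_equipotent : exists H Hinv, conjugate f q H Hinv.
Proof.
  apply (conjugate_of_cycle_matching f q Phi Hinh Hf Hq).
  - apply kind_matching_cycle.
  - apply kind_matching_injective.
  - apply kind_matching_surjective.
  - apply kind_matching_shape.
Qed.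

End KindConjugacy.

Section SwapAfter.

Context {X : Type}.

Lemma swap_after_iter (g : X -> X) x y z : (forall i, Nat.iter (S i) g z <> x /\ Nat.iter (S i) g z <> y) ->
  forall i, Nat.iter i (swap_after g x y) z = Nat.iter i g z.
Proof.
  intros H i; induction i as [|i IH]; [reflexivity|].
  rewrite !Nat.iter_succ, IH. unfold swap_after. destruct (H i) as [H1 H2].
  rewrite Nat.iter_succ in H1, H2. apply swap_other; auto.
Qed.

Lemma swap_after_aperiodic (g : X -> X) x y z : aperiodic g z ->
  (forall i, Nat.iter (S i) g z <> x /\ Nat.iter (S i) g z <> y) -> aperiodic (swap_after g x y) z.
Proof.
  intros Hz Ho q Hq E. apply (Hz q Hq). rewrite <- (swap_after_iter g x y z Ho); auto.
Qed.

End SwapAfter.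

Section Carve.

Context {X : Type}.
Variables (g : X -> X) (x : X) (n : nat).
Hypotheses (Hg : injective g) (Hx : aperiodic g x) (Hn : 1 <= n).

Local Notation y := (Nat.iter n g x).
Local Notation p := (swap_after g x y).

Lemma carve_distinct : x <> y.
Proof. intros E. apply (Hx n); [lia|auto]. Qed.

Lemma carve_iter_below i : i < n -> Nat.iter i p x = Nat.iter i g x.
Proof.
  induction i as [|i IH]; intros Hi; [reflexivity|].
  rewrite !Nat.iter_succ, IH by lia. unfold swap_after. apply swap_other; rewrite <- Nat.iter_succ;
    intros E; [change x with (Nat.iter 0 g x) in E at 2|]; apply (aperiodic_iter_inj g Hg x) in E; auto; lia.
Qed.

Lemma carve_least_period : least_period p x n.
Proof.
  split; [lia|split].
  - assert (Hn' : n = S (n - 1)) by lia.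
    transitivity (p (Nat.iter (n - 1) p x)); [rewrite <- Nat.iter_succ, <- Hn'; reflexivity|].
    rewrite carve_iter_below by lia. unfold swap_after. rewrite <- Nat.iter_succ, <- Hn'. apply swap_r.
  - intros q Hq Hqn E. rewrite carve_iter_below in E by lia.
    change x with (Nat.iter 0 g x) in E at 2. apply (aperiodic_iter_inj g Hg x) in E; auto; lia.
Qed.

Lemma carve_tail i : Nat.iter (S i) g y <> x /\ Nat.iter (S i) g y <> y.
Proof.
  rewrite <- Nat.iter_add. split; intros E.
  - change x with (Nat.iter 0 g x) in E at 2. apply (aperiodic_iter_inj g Hg x) in E; auto; lia.
  - apply (aperiodic_iter_inj g Hg x) in E; auto; lia.
Qed.

Lemma carve_infinite_cycle S : is_cycle g S -> S x \/ S y -> ~ finite_set S.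
Proof.
  intros HS HSxy. assert (Sx : S x).
  { destruct HSxy as [Sx|Sy]; auto.
    exact (invariant_orbit g S y x (proj1 (proj2 HS)) (orbit_sym g _ _ (orbit_iter g x n)) Sy). }
  rewrite (cycle_eq_orbit g S x HS Sx). apply aperiodic_iff_infinite; auto.
Qed.

Lemma carve_aperiodic : aperiodic p y.
Proof.
  apply swap_after_aperiodic; [|apply carve_tail]. apply (aperiodic_orbit g Hg x); auto. apply orbit_iter.
Qed.

Lemma carve_cycle_of_size_iff m S :
  cycle_of_size p m S <-> cycle_of_size g m S \/ (m = n /\ S = orbit p x).
Proof.
  pose proof (swap_perturbation g x y Hg) as Hpt. pose proof carve_distinct as Hxy.
  split.
  - intros HS. destruct (classic (S x \/ S y)) as [[Sx|Sy]|Hm].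
    + right. assert (E : S = orbit p x) by (apply cycle_eq_orbit; auto; apply HS).
      split; auto. rewrite E in HS.
      apply (has_card_unique _ _ _ (proj2 HS)).
      exact (least_period_card p (perturbation_injective _ _ _ _ Hpt) _ _ carve_least_period).
    + exfalso. pose proof carve_aperiodic as Hy.
      apply (aperiodic_iff_infinite p (perturbation_injective _ _ _ _ Hpt) y) in Hy. apply Hy.
      rewrite <- (cycle_eq_orbit p S y (proj1 HS) Sy). exact (has_card_finite _ _ (proj2 HS)).
    + left. apply (untouched_cycle_of_size g p (swap x y) (swap x y)); auto.
      rewrite meets_moved_swap; auto.
  - intros [HS|[-> ->]].
    + apply (untouched_cycle_of_size g p (swap x y) (swap x y)); auto.
      rewrite meets_moved_swap; auto. intros Hm.
      exact (carve_infinite_cycle S (proj1 HS) Hm (has_card_finite _ _ (proj2 HS))).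
    + split; [apply orbit_is_cycle|].
      apply (least_period_card p (perturbation_injective _ _ _ _ Hpt)), carve_least_period.
Qed.

Lemma carve_new_cycle : ~ cycle_of_size g n (orbit p x).
Proof.
  intros [HS Hc]. apply (carve_infinite_cycle _ HS); [left; apply orbit_refl|].
  exact (has_card_finite _ _ Hc).
Qed.

Lemma carve_card : family_card (cycle_of_size p n) = option_map S (family_card (cycle_of_size g n)) /\
  forall m, m <> n -> family_card (cycle_of_size p m) = family_card (cycle_of_size g m).
Proof.
  split.
  - apply (family_card_add _ _ (orbit p x)); [|apply carve_new_cycle].
    intros S. rewrite carve_cycle_of_size_iff. intuition.
  - intros m Hmn. apply family_card_ext. intros S. rewrite carve_cycle_of_size_iff. intuition.
Qed.

End Carve.

Section Absorb.

Context {X : Type}.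
Variables (g : X -> X) (x y : X) (n : nat).
Hypotheses (Hg : injective g) (Hx : least_period g x n) (Hy : aperiodic g y).

Local Notation p := (swap_after g x y).

Lemma absorb_disjoint : ~ orbit g x y.
Proof.
  intros Hxy. apply (proj1 (aperiodic_iff_infinite g Hg y) Hy).
  rewrite <- (orbit_eq g x y Hxy). destruct Hx as [H1 [H2 _]]. exact (periodic_orbit_finite g Hg x n H1 H2).
Qed.

Lemma absorb_distinct : x <> y.
Proof. intros E. apply absorb_disjoint. rewrite <- E. apply orbit_refl. Qed.

Lemma absorb_tail i : Nat.iter (S i) g y <> x /\ Nat.iter (S i) g y <> y.
Proof.
  split; intros E.
  - apply absorb_disjoint. exists 0, (S i). auto.
  - apply (Hy (S i)); auto; lia.
Qed.

Lemma absorb_iter_below i : i < n -> Nat.iter i p x = Nat.iter i g x.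
Proof.
  destruct Hx as [_ [_ Hmin]]. induction i as [|i IH]; intros Hi; [reflexivity|].
  rewrite !Nat.iter_succ, IH by lia. unfold swap_after. rewrite <- Nat.iter_succ. apply swap_other.
  - apply Hmin; lia.
  - intros E. apply absorb_disjoint. exists (S i), 0; auto.
Qed.

Lemma absorb_reaches : Nat.iter n p x = y.
Proof.
  destruct Hx as [Hn [Hxn _]]. assert (Hn' : n = S (n - 1)) by lia.
  transitivity (p (Nat.iter (n - 1) p x)); [rewrite <- Nat.iter_succ, <- Hn'; reflexivity|].
  rewrite absorb_iter_below by lia. unfold swap_after. rewrite <- Nat.iter_succ, <- Hn', Hxn. apply swap_l.
Qed.

Lemma absorb_aperiodic : aperiodic p y.
Proof. apply swap_after_aperiodic; [exact Hy|apply absorb_tail]. Qed.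

Lemma absorb_cycle_of_size_iff m S : cycle_of_size p m S <-> cycle_of_size g m S /\ S <> orbit g x.
Proof.
  pose proof (swap_perturbation g x y Hg) as Hpt. pose proof absorb_distinct as Hxy.
  assert (Hinf : forall S, is_cycle p S -> S x \/ S y -> ~ finite_set S).
  { intros T HT HTxy. assert (Ty : T y).
    { destruct HTxy as [Tx|Ty]; auto. rewrite <- absorb_reaches.
      apply (invariant_iter p T (proj1 (proj2 HT))); auto. }
    rewrite (cycle_eq_orbit p T y HT Ty).
    apply (aperiodic_iff_infinite p (perturbation_injective _ _ _ _ Hpt)), absorb_aperiodic. }
  split.
  - intros HS. destruct (classic (S x \/ S y)) as [Hm|Hm].
    + exfalso. exact (Hinf S (proj1 HS) Hm (has_card_finite _ _ (proj2 HS))).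
    + split.
      * apply (untouched_cycle_of_size g p (swap x y) (swap x y)); auto. rewrite meets_moved_swap; auto.
      * intros ->. apply Hm; left; apply orbit_refl.
  - intros [HS HB]. apply (untouched_cycle_of_size g p (swap x y) (swap x y)); auto.
    rewrite meets_moved_swap; auto. intros [Sx|Sy].
    + apply HB. apply cycle_eq_orbit; auto; apply HS.
    + apply (proj1 (aperiodic_iff_infinite g Hg y) Hy).
      rewrite <- (cycle_eq_orbit g S y); [|apply HS|auto]. exact (has_card_finite _ _ (proj2 HS)).
Qed.

Lemma absorbed_cycle_of_size : cycle_of_size g n (orbit g x).
Proof. split; [apply orbit_is_cycle|apply least_period_card; auto]. Qed.

Lemma absorb_card : family_card (cycle_of_size g n) = option_map S (family_card (cycle_of_size p n)) /\
  forall m, m <> n -> family_card (cycle_of_size p m) = family_card (cycle_of_size g m).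
Proof.
  split.
  - apply (family_card_add _ _ (orbit g x)).
    + intros S. rewrite absorb_cycle_of_size_iff. split.
      * intros HS. destruct (classic (S = orbit g x)); [right|left]; auto.
      * intros [[HS _]| ->]; auto. apply absorbed_cycle_of_size.
    + rewrite absorb_cycle_of_size_iff. tauto.
  - intros m Hmn. apply family_card_ext. intros S. rewrite absorb_cycle_of_size_iff.
    split; [tauto|]. intros HS; split; auto. intros ->. apply Hmn.
    exact (has_card_unique _ _ _ (proj2 HS) (proj2 absorbed_cycle_of_size)).
Qed.

End Absorb.

Section Matching.

Context {X : Type}.

Lemma cycle_of_size_zero_card (f : X -> X) : family_card (cycle_of_size f 0) = Some 0.
Proof.
  apply family_card_zero. intros S [[[a Sa] _] [[|b l] [_ [Hl HS]]]]; [|discriminate].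
  apply HS in Sa; inversion Sa.
Qed.

Lemma card_approx_aperiodic_point (f q : X -> X) : injective q -> card_approx f q ->
  (exists S, infinite_cycle f S) -> exists y, aperiodic q y.
Proof.
  intros Hq [Eopen [Efwd _]] [S HS].
  assert (Hq_inf : exists T, infinite_cycle q T).
  { destruct (classic (exists a, S a /\ forall b, f b <> a)) as [Hn|Hn].
    - assert (Hne : family_card (forward_cycle q) <> Some 0).
      { rewrite <- Efwd, family_card_zero. intros H; apply (H S); split; auto. }
      apply NNPP; intros Hno. apply Hne, family_card_zero. intros T HT; apply Hno; exists T; apply HT.
    - assert (Hne : family_card (open_cycle q) <> Some 0).
      { rewrite <- Eopen, family_card_zero. intros H; apply (H S); split; auto. }
      apply NNPP; intros Hno. apply Hne, family_card_zero. intros T HT; apply Hno; exists T; apply HT. }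
  destruct Hq_inf as [T HT]. apply (infinite_cycle_iff q Hq) in HT as [y [_ Hy]]; eauto.
Qed.

Lemma increase_size_card (q : X -> X) n k b : injective q -> (exists y, aperiodic q y) -> 1 <= n ->
  family_card (cycle_of_size q n) = Some b ->
  exists r, finite_perturbation q r /\ family_card (cycle_of_size r n) = Some (b + k) /\
    forall m, m <> n -> family_card (cycle_of_size r m) = family_card (cycle_of_size q m).
Proof.
  revert q b. induction k as [|k IH]; intros q b Hq [y Hy] Hn Hb.
  - exists q. split; [apply finite_perturbation_refl; auto|]. rewrite Nat.add_0_r; auto.
  - set (q1 := swap_after q y (Nat.iter n q y)).
    destruct (carve_card q y n Hq Hy Hn) as [E1 Eothers]. fold q1 in E1, Eothers. rewrite Hb in E1.
    assert (Hq1 : finite_perturbation q q1) by (apply swap_finite_perturbation; auto).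
    destruct (IH q1 (S b)) as [r [Hr [Er Hothers]]]; auto.
    + exact (finite_perturbation_injective _ _ Hq1).
    + exists (Nat.iter n q y). apply carve_aperiodic; auto.
    + exists r. split; [apply (finite_perturbation_trans _ q1); auto|].
      split; [rewrite Er; f_equal; lia|]. intros m Hm. rewrite Hothers, Eothers; auto.
Qed.

Lemma decrease_size_card (q : X -> X) n k b : injective q -> (exists y, aperiodic q y) ->
  family_card (cycle_of_size q n) = Some (b + k) ->
  exists r, finite_perturbation q r /\ family_card (cycle_of_size r n) = Some b /\
    forall m, m <> n -> family_card (cycle_of_size r m) = family_card (cycle_of_size q m).
Proof.
  revert q. induction k as [|k IH]; intros q Hq [y Hy] Hb.
  - exists q. split; [apply finite_perturbation_refl; auto|]. rewrite Nat.add_0_r in Hb; auto.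
  - assert (HC : exists C, cycle_of_size q n C).
    { apply NNPP; intros Hno. rewrite (proj2 (family_card_zero _)) in Hb; [injection Hb; lia|].
      intros S HS; apply Hno; eauto. }
    destruct HC as [C HC]. apply (cycle_of_size_iff q Hq) in HC as [x [_ Hx]].
    set (q1 := swap_after q x y).
    destruct (absorb_card q x y n Hq Hx Hy) as [E1 Eothers]. fold q1 in E1, Eothers. rewrite Hb in E1.
    assert (Hq1 : finite_perturbation q q1) by (apply swap_finite_perturbation; auto).
    destruct (IH q1) as [r [Hr [Er Hothers]]].
    + exact (finite_perturbation_injective _ _ Hq1).
    + exists y. apply (absorb_aperiodic q x y n); auto.
    + destruct (family_card (cycle_of_size q1 n)) as [c|]; simpl in E1; [|discriminate].
      injection E1 as E1. f_equal; lia.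
    + exists r. split; [apply (finite_perturbation_trans _ q1); auto|].
      split; auto. intros m Hm. rewrite Hothers, Eothers; auto.
Qed.

Lemma adjust_size_card (q : X -> X) n a b : injective q -> (exists y, aperiodic q y) -> 1 <= n ->
  family_card (cycle_of_size q n) = Some b ->
  exists r, finite_perturbation q r /\ family_card (cycle_of_size r n) = Some a /\
    forall m, m <> n -> family_card (cycle_of_size r m) = family_card (cycle_of_size q m).
Proof.
  intros Hq Hy Hn Hb. destruct (le_lt_dec b a) as [Hle|Hlt].
  - replace a with (b + (a - b)) by lia. apply increase_size_card; auto.
  - apply (decrease_size_card q n (b - a)); auto. rewrite Hb; f_equal; lia.
Qed.

Lemma match_sizes_below (f g : X -> X) N : injective g -> card_approx f g ->
  (exists S, infinite_cycle f S) ->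
  exists r, finite_perturbation g r /\
    (forall n, n < N -> family_card (cycle_of_size f n) = family_card (cycle_of_size r n)) /\
    (forall n, N <= n -> family_card (cycle_of_size r n) = family_card (cycle_of_size g n)).
Proof.
  intros Hg Hc Hinf. induction N as [|N [r [Hr [Hbelow Habove]]]].
  - exists g. split; [apply finite_perturbation_refl; auto|split; [intros; lia|auto]].
  - assert (Cfr : card_approx f r)
      by (apply (card_approx_trans _ g); auto; apply finite_perturbation_card_approx; auto).
    pose proof (finite_perturbation_injective _ _ Hr) as Hrinj.
    destruct (classic (family_card (cycle_of_size f N) = family_card (cycle_of_size r N))) as [E|E].
    + exists r. split; [auto|split; [|intros n Hn; apply Habove; lia]].
      intros n Hn. destruct (Nat.eq_dec n N) as [->|Hne]; auto. apply Hbelow; lia.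
    + assert (HN : 1 <= N) by (destruct N; [exfalso; apply E; rewrite !cycle_of_size_zero_card; auto|lia]).
      destruct Cfr as [_ [_ [_ Hfin]]]. destruct (Hfin N HN E) as [Ha Hb].
      destruct (family_card (cycle_of_size f N)) as [a|] eqn:Efa; [|contradiction].
      destruct (family_card (cycle_of_size r N)) as [b|] eqn:Eb; [|contradiction].
      destruct (adjust_size_card r N a b) as [r' [Hr' [Ea Eothers]]]; auto.
      { apply (card_approx_aperiodic_point f); auto.
        apply (card_approx_trans _ g); auto; apply finite_perturbation_card_approx; auto. }
      exists r'. split; [apply (finite_perturbation_trans _ r); auto|split].
      * intros n Hn. destruct (Nat.eq_dec n N) as [->|Hne]; [congruence|].
        rewrite Eothers, Hbelow; auto; lia.
      * intros n Hn. rewrite Eothers, Habove; auto; lia.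
Qed.

End Matching.

Section Conclusion.

Context {X : Type}.

Lemma finite_perturbation_matching_sizes (f g : X -> X) : injective g -> card_approx f g ->
  (exists S, infinite_cycle f S) ->
  exists q, finite_perturbation g q /\ card_approx f q /\
    forall n, family_card (cycle_of_size f n) = family_card (cycle_of_size q n).
Proof.
  intros Hg Hc Hinf. pose proof Hc as [_ [_ [[N HN] _]]].
  destruct (match_sizes_below f g N Hg Hc Hinf) as [q [Hq [Hbelow Habove]]].
  exists q. split; [auto|split].
  - apply (card_approx_trans _ g); auto. apply finite_perturbation_card_approx; auto.
  - intros n. destruct (le_lt_dec N n); [rewrite Habove, HN|apply Hbelow]; auto.
Qed.

Lemma kinds_equipotent (f q : X -> X) : countably_infinite X -> card_approx f q ->
  (forall n, family_card (cycle_of_size f n) = family_card (cycle_of_size q n)) ->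
  forall t, equipotent (fun C => has_kind f C t) (fun C => has_kind q C t).
Proof.
  intros HX [Eopen [Efwd _]] Esize t.
  apply (cycle_families_equipotent_iff f q); auto;
    try (intros S HS; apply (has_kind_is_cycle _ _ t HS)).
  destruct t; simpl; auto.
Qed.

Lemma conjugate_finite_perturbation (f g : X -> X) : countably_infinite X ->
  injective f -> injective g -> card_approx f g -> (exists S, infinite_cycle f S) ->
  exists q H Hinv, finite_perturbation g q /\ conjugate f q H Hinv.
Proof.
  intros HX Hf Hg Hc Hinf.
  destruct (finite_perturbation_matching_sizes f g Hg Hc Hinf) as [q [Hq [Cfq Esize]]].
  assert (Hinh : inhabited X) by (destruct HX as [e [_ Hs]]; destruct (Hs 0) as [d _]; exact (inhabits d)).
  destruct (conjugate_of_kinds_equipotent f q Hinh Hf (finite_perturbation_injective _ _ Hq)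
              (kinds_equipotent f q HX Cfq Esize)) as [H [Hinv Hconj]].
  exists q, H, Hinv; auto.
Qed.

Lemma fin_perm_finite_perturbation (g h1 h2 : X -> X) : injective g -> fin_perm h1 -> fin_perm h2 ->
  finite_perturbation g (fun a => h1 (h2 (g a))).
Proof.
  intros Hg [[h1i [F1 F1']] [L1 HL1]] [[h2i [F2 F2']] [L2 HL2]].
  exists (fun a => h1 (h2 a)), (fun a => h2i (h1i a)). split.
  - split; [auto|split; [|split]].
    + intros a; rewrite F1, F2; auto.
    + intros a; rewrite F2', F1'; auto.
    + reflexivity.
  - exists (L1 ++ L2). intros a Ha. apply in_or_app. destruct (classic (h2 a = a)) as [E|E].
    + left. apply HL1. unfold moved in Ha. rewrite E in Ha; auto.
    + right. apply HL2; auto.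
Qed.

End Conclusion.

Theorem mainTheorem11 (Ω : Type) (HΩ : countably_infinite Ω) (f g : Ω -> Ω)
  (Hf : injective f) (Hg : injective g)
  (Hfi : exists S, infinite_cycle f S) (Hgi : exists S, infinite_cycle g S) :
  approx_fin f g <->
  exists (h hinv h1 h2 : Ω -> Ω),
    (forall a, hinv (h a) = a) /\ (forall a, h (hinv a) = a) /\
    fin_perm h1 /\ fin_perm h2 /\
    (forall a, f a = hinv (h2 (g (h1 (h a))))).
Proof.
  rewrite (approx_fin_iff_card_approx f g HΩ). split.
  - intros Hc.
    destruct (conjugate_finite_perturbation f g HΩ Hf Hg Hc Hfi)
      as [q [H [Hinv [[k [kinv [[_ [K1 [K2 Hq]]] HK]]] [H1 [H2 Hfq]]]]]].
    exists H, Hinv, (fun a => a), k. split; [|split; [|split; [|split]]]; auto.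
    + split; [exists (fun a => a); auto|]. exists []. intros a Ha; apply Ha; reflexivity.
    + split; [exists kinv; auto|exact HK].
    + intros a. rewrite Hfq, Hq. reflexivity.
  - intros [h [hinv [h1 [h2 [E1 [E2 [P1 [P2 Ef]]]]]]]].
    pose proof P1 as [[h1i [F1 F1']] _].
    apply (card_approx_trans _ (fun a => h1 (h2 (g a)))).
    + apply (conjugate_card_approx f _ (fun a => h1 (h a)) (fun b => hinv (h1i b))).
      split; [intros a; rewrite F1, E1; auto|split; [intros a; rewrite E2, F1'; auto|]].
      intros a. rewrite F1. apply Ef.
    + apply card_approx_sym, finite_perturbation_card_approx, fin_perm_finite_perturbation; auto.
Qed.
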